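(* For $|q|<1$, with sums over $i,j,k\in\mathbb{Z}_{\ge0}$, \begin{align*} \sum \frac{q^{\frac{3}{2}i^2+j^2+\frac{1}{2}k^2+2ij+ik+jk}}{(q;q)_i(q;q)_j(q;q)_k}&=\frac{(-q^{\frac{1}{2}};q)_\infty}{(q,q^4;q^5)_\infty}, \\ \sum \frac{q^{\frac{3}{2}i^2+j^2+\frac{1}{2}k^2+2ij+ik+jk+\frac{1}{2}i+\frac{1}{2}k}}{(q;q)_i(q;q)_j(q;q)_k}&=\frac{(-q;q)_\infty}{(q,q^4;q^5)_\infty}, \\ \sum\frac{q^{\frac{3}{2}i^2+j^2+\frac{1}{2}k^2+2ij+ik+jk-\frac{1}{2}i-\frac{1}{2}k}}{(q;q)_i(q;q)_j(q;q)_k}&=2\frac{(-q;q)_\infty}{(q,q^4;q^5)_\infty}, \\ \sum\frac{q^{\frac{3}{2}i^2+j^2+\frac{1}{2}k^2+2ij+ik+jk+i+j}}{(q;q)_i(q;q)_j(q;q)_k}&=\frac{(-q^{\frac{1}{2}};q)_\infty}{(q^2,q^3;q^5)_\infty}, \\ \sum\frac{q^{\frac{3}{2}i^2+j^2+\frac{1}{2}k^2+2ij+ik+jk+\frac{3}{2}i+j+\frac{1}{2}k}}{(q;q)_i(q;q)_j(q;q)_k}&=\frac{(-q;q)_\infty}{(q^2,q^3;q^5)_\infty}, \\ \sum\frac{q^{\frac{3}{2}i^2+j^2+\frac{1}{2}k^2+2ij+ik+jk+\frac{1}{2}i+j-\frac{1}{2}k}}{(q;q)_i(q;q)_j(q;q)_k}&=2\frac{(-q;q)_\infty}{(q^2,q^3;q^5)_\infty}.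 \end{align*}
   Context: For $|q|<1$: $(a;q)_n=\prod_{k=0}^{n-1}(1-aq^k)$ ($(a;q)_0=1$), $(a;q)_\infty=\prod_{k\ge0}(1-aq^k)$, $(a_1,\dots,a_m;q)_\infty=\prod_\ell(a_\ell;q)_\infty$. Half-integer powers of $q$ are taken with respect to a fixed choice of $q^{1/2}$ (e.g. $0<q<1$). *)

From Stdlib Require Import Reals.
From Coquelicot Require Import Coquelicot.

Open Scope C_scope.

Fixpoint qpoch (a q : C) (n : nat) : C :=
  match n with
  | O => RtoC 1
  | S m => qpoch a q m * (RtoC 1 - a * pow_n q m)
  end.

Definition qpinf (a q : C) : C :=
  @lim C_CompleteNormedModule (filtermap (fun n => qpoch a q n) eventually).

Definition tsum3 (F : nat -> nat -> nat -> C) (N : nat) : C :=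
  sum_n (fun i => sum_n (fun j => sum_n (fun k => F i j k) N) N) N.

Definition triple_series (F : nat -> nat -> nat -> C) (l : C) : Prop :=
  filterlim (tsum3 F) eventually (locally l).

(* summand  r^E / ((q;q)_i (q;q)_j (q;q)_k)  with q = r^2, r = q^{1/2};
   E i j k is twice the exponent of q in the paper *)
Definition summand (r : C) (E : nat -> nat -> nat -> nat) (i j k : nat) : C :=
  let q := r * r in
  pow_n r (E i j k) / (qpoch q q i * qpoch q q j * qpoch q q k).

Definition Q2 (i j k : nat) : nat :=
  3*i*i + 2*j*j + k*k + 4*i*j + 2*i*k + 2*j*k.

From Stdlib Require Import Reals Lia Lra Psatz.
From Coquelicot Require Import Coquelicot.
Open Scope C_scope.

(* Summing over k first, Euler's identity turns the k-sum into the product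
   (-w q^(i+j); q)_oo; grouping by n = i + j, the q-binomial theorem then
   collapses the (i, j)-sum to (-w; q)_oo q^(n^2 + s n) / (q; q)_n, with w = q^(d/2)
   for d = 0, 1, 2 and s = 0, 1 according to the identity (for d = 0, use
   (-1; q)_oo = 2 (-q; q)_oo).  What remains is (-w; q)_oo times the
   Rogers-Ramanujan series, which we evaluate by iterating
   the unit Bailey pair twice and summing the resulting theta series with the
   Jacobi triple product.  All limits are justified by dominated convergence for
   series (Tannery's theorem) with geometric majorants. *)

Definition is_lim_seqC (u : nat -> C) (l : C) : Prop :=
  forall eps : R, (0 < eps)%R ->
    exists N, forall n, (N <= n)%nat -> (Cmod (u n - l) < eps)%R.

Lemma Cmod_minus_norm (a b : C) :
  Cmod (a - b) = @norm _ C_NormedModule (@minus C_AbelianGroup a b).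
Proof. reflexivity. Qed.

Lemma is_lim_seqC_filterlim u l :
  is_lim_seqC u l -> filterlim u eventually (locally l).
Proof.
  intros H. apply filterlim_locally. intros eps.
  destruct (H eps (cond_pos eps)) as [N HN]. exists N. intros n Hn.
  apply (@norm_compat1 C_AbsRing C_NormedModule). rewrite <- Cmod_minus_norm. now apply HN.
Qed.

Lemma filterlim_is_lim_seqC u l :
  filterlim u eventually (locally l) -> is_lim_seqC u l.
Proof.
  intros H eps Heps.
  assert (Hf := @norm_factor_gt_0 _ C_NormedModule).
  assert (Hp : (0 < eps / @norm_factor _ C_NormedModule)%R) by (apply Rdiv_lt_0_compat; auto).
  destruct (proj1 (filterlim_locally u l) H (mkposreal _ Hp)) as [N HN].
  exists N. intros n Hn. specialize (HN n Hn).
  apply (@norm_compat2 C_AbsRing C_NormedModule) in HN. simpl in HN. rewrite Cmod_minus_norm.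
  replace eps with (@norm_factor _ C_NormedModule * (eps / @norm_factor _ C_NormedModule))%R
    by (field; lra).
  exact HN.
Qed.

Lemma is_lim_seqC_dist_le u l c B N0 : is_lim_seqC u l ->
  (forall n, (N0 <= n)%nat -> (Cmod (u n - c) <= B)%R) -> (Cmod (l - c) <= B)%R.
Proof.
  intros H HB. apply Rnot_lt_le. intro X.
  destruct (H (Cmod (l - c) - B)%R) as [N HN]; [lra|].
  specialize (HN (N + N0)%nat ltac:(lia)). specialize (HB (N + N0)%nat ltac:(lia)).
  pose proof (Cmod_triangle (l - u (N + N0)%nat) (u (N + N0)%nat - c)) as T.
  replace (l - u (N + N0)%nat + (u (N + N0)%nat - c)) with (l - c) in T by ring.
  replace (l - u (N + N0)%nat) with (- (u (N + N0)%nat - l)) in T by ring.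
  rewrite Cmod_opp in T. lra.
Qed.

Lemma is_lim_seqC_unique u l1 l2 : is_lim_seqC u l1 -> is_lim_seqC u l2 -> l1 = l2.
Proof.
  intros H1 H2.
  assert (D : forall eps, (0 < eps)%R -> (Cmod (l1 - l2) <= eps)%R).
  { intros eps He. destruct (H2 eps He) as [N HN].
    apply (is_lim_seqC_dist_le u l1 l2 eps N H1). intros n Hn. left. now apply HN. }
  apply Ceq_minus, Cmod_eq_0, Rle_antisym; [|apply Cmod_ge_0].
  apply Rnot_lt_le. intros P. specialize (D (Cmod (l1 - l2) / 2)%R ltac:(lra)). lra.
Qed.

Lemma is_lim_seqC_ext u v l : (forall n, u n = v n) -> is_lim_seqC u l -> is_lim_seqC v l.
Proof.
  intros E H eps He. destruct (H eps He) as [N HN].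
  exists N. intros n Hn. rewrite <- E. auto.
Qed.

Lemma is_lim_seqC_ext_loc u v l N0 :
  (forall n, (N0 <= n)%nat -> u n = v n) -> is_lim_seqC u l -> is_lim_seqC v l.
Proof.
  intros E H eps He. destruct (H eps He) as [N HN].
  exists (N + N0)%nat. intros n Hn. rewrite <- E by lia. apply HN; lia.
Qed.

Lemma is_lim_seqC_const c : is_lim_seqC (fun _ => c) c.
Proof.
  intros eps He. exists O. intros.
  replace (c - c) with (RtoC 0) by ring. rewrite Cmod_0. lra.
Qed.

Lemma is_lim_seqC_plus u v a b :
  is_lim_seqC u a -> is_lim_seqC v b -> is_lim_seqC (fun n => u n + v n) (a + b).
Proof.
  intros H1 H2. apply filterlim_is_lim_seqC.
  apply (filterlim_comp_2 (F := eventually) (G := locally a) (H := locally b)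
           u v (@plus C_AbelianGroup)); try apply is_lim_seqC_filterlim; auto.
  apply (@filterlim_plus _ C_NormedModule).
Qed.

Lemma is_lim_seqC_mult u v a b :
  is_lim_seqC u a -> is_lim_seqC v b -> is_lim_seqC (fun n => u n * v n) (a * b).
Proof.
  intros H1 H2 eps He.
  set (A := (Cmod a + 1)%R). set (B := (Cmod b + 1)%R).
  assert (PA : (0 < A)%R) by (unfold A; pose proof (Cmod_ge_0 a); lra).
  assert (PB : (0 < B)%R) by (unfold B; pose proof (Cmod_ge_0 b); lra).
  destruct (H2 1%R) as [N0 HN0]; [lra|].
  destruct (H1 (eps / (2 * B))%R) as [N1 HN1]; [apply Rdiv_lt_0_compat; lra|].
  destruct (H2 (eps / (2 * A))%R) as [N2 HN2]; [apply Rdiv_lt_0_compat; lra|].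
  exists (N0 + N1 + N2)%nat. intros n Hn.
  specialize (HN0 n ltac:(lia)). specialize (HN1 n ltac:(lia)). specialize (HN2 n ltac:(lia)).
  assert (Hv : (Cmod (v n) <= B)%R).
  { pose proof (Cmod_triangle (v n - b) b) as T.
    replace (v n - b + b) with (v n) in T by ring. unfold B; lra. }
  replace (u n * v n - a * b) with ((u n - a) * v n + a * (v n - b)) by ring.
  eapply Rle_lt_trans; [apply Cmod_triangle|]. rewrite !Cmod_mult.
  assert (X1 : (Cmod (u n - a) * Cmod (v n) < eps / 2)%R).
  { apply Rle_lt_trans with (Cmod (u n - a) * B)%R.
    - apply Rmult_le_compat_l; [apply Cmod_ge_0|lra].
    - replace (eps / 2)%R with (eps / (2 * B) * B)%R by (field; lra).
      apply Rmult_lt_compat_r; lra. }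
  assert (X2 : (Cmod a * Cmod (v n - b) < eps / 2)%R).
  { apply Rle_lt_trans with (A * Cmod (v n - b))%R.
    - apply Rmult_le_compat_r; [apply Cmod_ge_0|unfold A; lra].
    - replace (eps / 2)%R with (A * (eps / (2 * A)))%R by (field; lra).
      apply Rmult_lt_compat_l; lra. }
  lra.
Qed.

Lemma is_lim_seqC_scal_l c u a : is_lim_seqC u a -> is_lim_seqC (fun n => c * u n) (c * a).
Proof. intros. apply is_lim_seqC_mult; auto. apply is_lim_seqC_const. Qed.

Lemma is_lim_seqC_scal_r c u a : is_lim_seqC u a -> is_lim_seqC (fun n => u n * c) (a * c).
Proof. intros. apply is_lim_seqC_mult; auto. apply is_lim_seqC_const. Qed.

Lemma is_lim_seqC_inv (u : nat -> C) (a : C) :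
  a <> 0 -> is_lim_seqC u a -> is_lim_seqC (fun n => / u n) (/ a).
Proof.
  intros Ha H eps He.
  assert (Pa : (0 < Cmod a)%R) by now apply Cmod_gt_0.
  destruct (H (Cmod a / 2)%R) as [N1 HN1]; [lra|].
  destruct (H (eps * (Cmod a * Cmod a) / 2)%R) as [N2 HN2].
  { apply Rmult_lt_0_compat; [apply Rmult_lt_0_compat; [lra|nra]| lra]. }
  exists (N1 + N2)%nat. intros n Hn.
  specialize (HN1 n ltac:(lia)). specialize (HN2 n ltac:(lia)).
  assert (Hu : (Cmod a / 2 <= Cmod (u n))%R).
  { pose proof (Cmod_triangle (u n) (- (u n - a))) as T.
    replace (u n + - (u n - a)) with a in T by ring. rewrite Cmod_opp in T. lra. }
  assert (un0 : u n <> 0). { intro X. rewrite X, Cmod_0 in Hu. lra. }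
  replace (/ u n - / a) with (- (u n - a) / (u n * a)) by (field; auto).
  rewrite Cmod_div by (apply Cmult_neq_0; auto). rewrite Cmod_mult, Cmod_opp.
  apply Rmult_lt_reg_r with (Cmod (u n) * Cmod a)%R; [nra|].
  unfold Rdiv. rewrite Rmult_assoc, Rinv_l by nra.
  apply Rlt_le_trans with (eps * (Cmod a * Cmod a) / 2)%R; [lra|].
  apply Rle_trans with (eps * (Cmod (u n) * Cmod a))%R; [|lra].
  unfold Rdiv. rewrite Rmult_assoc. apply Rmult_le_compat_l; [lra|]. nra.
Qed.

Lemma is_lim_seqC_subseq u l (f : nat -> nat) :
  (forall M, exists N, forall n, (N <= n)%nat -> (M <= f n)%nat) ->
  is_lim_seqC u l -> is_lim_seqC (fun n => u (f n)) l.
Proof.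
  intros Hf H eps He. destruct (H eps He) as [M HM]. destruct (Hf M) as [N HN].
  exists N. intros n Hn. apply HM. auto.
Qed.

Lemma is_lim_seqC_shift u l k : is_lim_seqC u l -> is_lim_seqC (fun N => u (N + k)%nat) l.
Proof. apply is_lim_seqC_subseq. intros M. exists M. intros; lia. Qed.

Lemma is_lim_seqC_sub_shift u l k : is_lim_seqC u l -> is_lim_seqC (fun N => u (N - k)%nat) l.
Proof. apply is_lim_seqC_subseq. intros M. exists (M + k)%nat. intros; lia. Qed.

Lemma is_lim_seqC_cauchy u :
  (forall eps, (0 < eps)%R -> exists N, forall m n, (N <= m)%nat -> (N <= n)%nat ->
     (Cmod (u m - u n) < eps)%R) ->
  is_lim_seqC u (@lim C_CompleteNormedModule (filtermap u eventually)).
Proof.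
  intros H.
  assert (PF : ProperFilter (filtermap u eventually))
    by (apply filtermap_proper_filter, eventually_filter).
  assert (Hc : cauchy (filtermap u eventually)).
  { intros eps. destruct (H eps (cond_pos eps)) as [N HN]. exists (u N), N. intros n Hn.
    apply (@norm_compat1 C_AbsRing C_NormedModule). rewrite <- Cmod_minus_norm. apply HN; lia. }
  pose proof (@complete_cauchy C_CompleteNormedModule _ PF Hc) as Hl.
  apply filterlim_is_lim_seqC, filterlim_locally. intros eps. apply Hl.
Qed.

Fixpoint csum (f : nat -> C) (n : nat) : C :=
  match n with O => 0 | S m => csum f m + f m end.

Fixpoint rsum (f : nat -> R) (n : nat) : R :=
  match n with O => 0%R | S m => (rsum f m + f m)%R end.

Lemma csum_S (f : nat -> C) n : csum f (S n) = csum f n + f n.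
Proof. reflexivity. Qed.

Lemma rsum_S (f : nat -> R) n : rsum f (S n) = (rsum f n + f n)%R.
Proof. reflexivity. Qed.

Lemma csum_ext n (f g : nat -> C) : (forall k, (k < n)%nat -> f k = g k) -> csum f n = csum g n.
Proof.
  induction n; simpl; intros H; auto.
  rewrite IHn by (intros; apply H; lia). rewrite H by lia. auto.
Qed.

Lemma rsum_ext n (f g : nat -> R) : (forall k, (k < n)%nat -> f k = g k) -> rsum f n = rsum g n.
Proof.
  induction n; simpl; intros H; auto.
  rewrite IHn by (intros; apply H; lia). rewrite H by lia. auto.
Qed.

Lemma csum_plus n (f g : nat -> C) : csum (fun k => f k + g k) n = csum f n + csum g n.
Proof. induction n; simpl. ring. rewrite IHn. ring. Qed.

Lemma csum_minus n (f g : nat -> C) : csum (fun k => f k - g k) n = csum f n - csum g n.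
Proof. induction n; simpl. ring. rewrite IHn. ring. Qed.

Lemma csum_scal_l n c (f : nat -> C) : csum (fun k => c * f k) n = c * csum f n.
Proof. induction n; simpl. ring. rewrite IHn. ring. Qed.

Lemma csum_scal_r n c (f : nat -> C) : csum (fun k => f k * c) n = csum f n * c.
Proof. induction n; simpl. ring. rewrite IHn. ring. Qed.

Lemma csum_eq0 n (f : nat -> C) : (forall k, (k < n)%nat -> f k = 0) -> csum f n = 0.
Proof. induction n; simpl; intros H. reflexivity. rewrite IHn, H by auto. ring. Qed.

Lemma csum_S_shift n (f : nat -> C) : csum f (S n) = f O + csum (fun k => f (S k)) n.
Proof. induction n. simpl. ring. rewrite csum_S, IHn. simpl. ring. Qed.

Lemma csum_S_last0 n (f : nat -> C) : f n = 0 -> csum f (S n) = csum f n.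
Proof. intros H. simpl. rewrite H. ring. Qed.

Lemma csum_S_first0 n (f : nat -> C) : f O = 0 -> csum f (S n) = csum (fun k => f (S k)) n.
Proof. intros H. rewrite csum_S_shift, H. ring. Qed.

Lemma csum_pascal_split n (f g : nat -> C) : f (S n) = 0 ->
  csum (fun k => f k + match k with O => 0 | S j => g j end) (S (S n)) =
  csum f (S n) + csum g (S n).
Proof.
  intros H. rewrite csum_plus, (csum_S_last0 (S n) f) by auto.
  rewrite (csum_S_first0 (S n) (fun k => match k with O => 0 | S j => g j end)); reflexivity.
Qed.

Lemma csum_add a b (f : nat -> C) : csum f (a + b) = csum f a + csum (fun k => f (a + k)%nat) b.
Proof.
  induction b. simpl. rewrite Nat.add_0_r. ring.
  rewrite Nat.add_succ_r. simpl. rewrite IHb. ring.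
Qed.

Lemma rsum_add a b (f : nat -> R) : rsum f (a + b) = (rsum f a + rsum (fun k => f (a + k)%nat) b)%R.
Proof.
  induction b. simpl. rewrite Nat.add_0_r. ring.
  rewrite Nat.add_succ_r. simpl. rewrite IHb. ring.
Qed.

Lemma csum_rev n (f : nat -> C) : csum f n = csum (fun k => f (n - 1 - k)%nat) n.
Proof.
  induction n; [reflexivity|].
  rewrite csum_S, IHn, csum_S_shift. replace (S n - 1 - 0)%nat with n by lia.
  rewrite Cplus_comm. f_equal. apply csum_ext. intros k Hk. f_equal. lia.
Qed.

Lemma csum_triangle_swap n (f : nat -> nat -> C) :
  csum (fun j => csum (fun r => f j r) (S j)) (S n) =
  csum (fun r => csum (fun m => f (r + m)%nat r) (S (n - r))) (S n).
Proof.
  induction n; [simpl; ring|].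
  rewrite csum_S, IHn.
  rewrite (csum_S (fun r => csum (fun m => f (r + m)%nat r) (S (S n - r))) (S n)).
  replace (S n - S n)%nat with O by lia.
  rewrite (csum_ext (S n) (fun r => csum (fun m => f (r + m)%nat r) (S (S n - r)))
     (fun r => csum (fun m => f (r + m)%nat r) (S (n - r)) + f (S n) r)).
  - rewrite csum_plus.
    change (csum (fun m => f (S n + m)%nat (S n)) 1) with (0 + f (S n + 0)%nat (S n)).
    rewrite Nat.add_0_r, <- Cplus_assoc, Cplus_0_l, <- csum_S. reflexivity.
  - intros r Hr. replace (S (S n - r)) with (S (S (n - r))) by lia.
    rewrite csum_S. do 2 f_equal. lia.
Qed.

Lemma csum_fold_odd n (f : nat -> C) :
  csum f (S (2 * n)) = csum (fun r => f (n + r)%nat + f (n - r)%nat) (S n) - f n.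
Proof.
  replace (S (2 * n)) with (n + S n)%nat by lia.
  rewrite csum_add, csum_plus, (csum_S_shift n (fun r => f (n - r)%nat)), Nat.sub_0_r.
  rewrite (csum_rev n f), (csum_ext n (fun k => f (n - 1 - k)%nat) (fun k => f (n - S k)%nat))
    by (intros; f_equal; lia).
  ring.
Qed.

Lemma csum_fold_even n (f : nat -> C) :
  csum f (2 * n + 2) = csum (fun r => f (n + 1 + r)%nat + f (n - r)%nat) (S n).
Proof.
  replace (2 * n + 2)%nat with (S n + S n)%nat by lia.
  rewrite csum_add, csum_plus, (csum_rev (S n) f), Cplus_comm.
  f_equal; apply csum_ext; intros; f_equal; lia.
Qed.

Lemma sum_n_csum (f : nat -> C) N : sum_n f N = csum f (S N).
Proof. induction N. rewrite sum_O. simpl. ring. rewrite sum_Sn, IHN. reflexivity. Qed.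

Lemma Cmod_csum_le n (f : nat -> C) : (Cmod (csum f n) <= rsum (fun k => Cmod (f k)) n)%R.
Proof.
  induction n; simpl. rewrite Cmod_0. lra.
  eapply Rle_trans; [apply Cmod_triangle|]. lra.
Qed.

Lemma rsum_le n (f g : nat -> R) :
  (forall k, (k < n)%nat -> f k <= g k)%R -> (rsum f n <= rsum g n)%R.
Proof.
  induction n; simpl; intros H. lra.
  specialize (IHn ltac:(intros; apply H; lia)). specialize (H n ltac:(lia)). lra.
Qed.

Lemma rsum_nonneg n (f : nat -> R) : (forall k, 0 <= f k)%R -> (0 <= rsum f n)%R.
Proof. induction n; simpl; intros H. lra. specialize (IHn H). specialize (H n). lra. Qed.

Lemma rsum_scal_l n c (f : nat -> R) : rsum (fun k => c * f k)%R n = (c * rsum f n)%R.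
Proof. induction n; simpl. ring. rewrite IHn. ring. Qed.

Lemma rsum_const n c : rsum (fun _ => c) n = (INR n * c)%R.
Proof. induction n. simpl. ring. rewrite rsum_S, IHn, S_INR. ring. Qed.

Lemma rsum_S_shift (f : nat -> R) n : rsum f (S n) = (f 0%nat + rsum (fun k => f (S k)) n)%R.
Proof. induction n. simpl. ring. rewrite rsum_S, IHn. simpl. ring. Qed.

Lemma rsum_geom n t : (0 <= t < 1)%R -> rsum (fun k => t ^ k)%R n = ((1 - t ^ n) / (1 - t))%R.
Proof. intros Ht. induction n; simpl. field. lra. rewrite IHn. field. lra. Qed.

Lemma rsum_geom_le n t : (0 <= t < 1)%R -> (rsum (fun k => t ^ k)%R n <= 1 / (1 - t))%R.
Proof.
  intros Ht. rewrite rsum_geom by auto. unfold Rdiv. apply Rmult_le_compat_r.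
  - apply Rlt_le, Rinv_0_lt_compat; lra.
  - pose proof (pow_le t n ltac:(lra)). lra.
Qed.

Lemma rsum_geom_shift_le K n t :
  (0 <= t < 1)%R -> (rsum (fun k => t ^ (K + k))%R n <= t ^ K / (1 - t))%R.
Proof.
  intros Ht. rewrite (rsum_ext n _ (fun k => t ^ K * t ^ k)%R) by (intros; apply pow_add).
  rewrite rsum_scal_l. unfold Rdiv.
  replace (t ^ K * / (1 - t))%R with (t ^ K * (1 / (1 - t)))%R by (field; lra).
  apply Rmult_le_compat_l; [apply pow_le; lra|]. apply rsum_geom_le; auto.
Qed.

(** * q-Pochhammer symbols and Gaussian binomial coefficients *)

Lemma pow_n_Cpow (x : C) n : pow_n x n = x ^ n.
Proof. induction n; simpl. reflexivity. rewrite IHn. reflexivity. Qed.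

Lemma qpoch_0 a q : qpoch a q 0 = 1.
Proof. reflexivity. Qed.

Lemma qpoch_S a q n : qpoch a q (S n) = qpoch a q n * (1 - a * q ^ n).
Proof. simpl. rewrite pow_n_Cpow. reflexivity. Qed.

Lemma qpoch_add a q n m : qpoch a q (n + m) = qpoch a q n * qpoch (a * q ^ n) q m.
Proof.
  induction m. rewrite Nat.add_0_r, qpoch_0. ring.
  rewrite Nat.add_succ_r, !qpoch_S, IHm, Cpow_add_r. ring.
Qed.

Lemma qpoch_S_front a q n : qpoch a q (S n) = (1 - a) * qpoch (a * q) q n.
Proof.
  change (S n) with (1 + n)%nat. rewrite qpoch_add, qpoch_S, qpoch_0.
  rewrite Cpow_1_r. f_equal. ring.
Qed.

Lemma pow_le1 (x : R) n : (0 <= x <= 1)%R -> (x ^ n <= 1)%R.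
Proof. intros H. rewrite <- (pow1 n). apply pow_incr. lra. Qed.

Lemma pow_le_decr (x : R) m n : (0 <= x <= 1)%R -> (m <= n)%nat -> (x ^ n <= x ^ m)%R.
Proof.
  intros H Hmn. replace n with (m + (n - m))%nat by lia. rewrite pow_add.
  pose proof (pow_le1 x (n - m) H). pose proof (pow_le x m ltac:(lra)). nra.
Qed.

Lemma Cmod_pow_le1 (q : C) n : (Cmod q <= 1)%R -> (Cmod (q ^ n) <= 1)%R.
Proof. intros H. rewrite Cmod_pow. apply pow_le1. split; [apply Cmod_ge_0|auto]. Qed.

Lemma Cmod_pow_le_pow (q : C) a b :
  (Cmod q < 1)%R -> (b <= a)%nat -> (Cmod (q ^ a) <= Cmod q ^ b)%R.
Proof. intros Hq H. rewrite Cmod_pow. apply pow_le_decr; auto. split; [apply Cmod_ge_0|lra]. Qed.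

Lemma Cmod_pow_S_lt1 (q : C) k : (Cmod q < 1)%R -> (Cmod (q ^ S k) < 1)%R.
Proof. intros H. rewrite Cmod_pow. apply pow_lt_1_compat; [split; [apply Cmod_ge_0|auto]|lia]. Qed.

Lemma Cmod_pow_m1 r : Cmod ((-1) ^ r) = 1%R.
Proof. rewrite Cmod_pow, Cmod_R. replace (Rabs (-1)) with 1%R by (rewrite Rabs_left; lra). apply pow1. Qed.

Lemma Cpow_m1_sub n r : (r <= n)%nat -> (-1) ^ (n - r) = (-1) ^ n * (-1) ^ r.
Proof.
  intros H. replace n with ((n - r) + r)%nat at 2 by lia. rewrite Cpow_add_r.
  rewrite <- Cmult_assoc, <- Cpow_mult_l. replace ((-1) * (-1)) with (RtoC 1) by ring.
  rewrite Cpow_1_l. ring.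
Qed.

Lemma Cpow_opp (z : C) n : (- z) ^ n = (-1) ^ n * z ^ n.
Proof. replace (- z) with ((-1) * z) by ring. apply Cpow_mult_l. Qed.

Lemma Cpow_0_S n : (0 : C) ^ S n = 0.
Proof. rewrite Cpow_S. ring. Qed.

Lemma one_minus_neq0 (z : C) : (Cmod z < 1)%R -> 1 - z <> 0.
Proof.
  intros H E. replace z with (1 - (1 - z)) in H by ring.
  rewrite E in H. replace (1 - 0) with (RtoC 1) in H by ring. rewrite Cmod_1 in H. lra.
Qed.

Lemma Cmult_cancel_l (c x y : C) : c <> 0 -> c * x = c * y -> x = y.
Proof. intros H E. replace x with (/ c * (c * x)) by (field; auto). rewrite E. field. auto. Qed.

Lemma qpoch_neq0 a q n : (Cmod a < 1)%R -> (Cmod q <= 1)%R -> qpoch a q n <> 0.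
Proof.
  intros Ha Hq. induction n.
  - rewrite qpoch_0. intro E. injection E. lra.
  - rewrite qpoch_S. apply Cmult_neq_0; auto. apply one_minus_neq0.
    rewrite Cmod_mult. pose proof (Cmod_pow_le1 q n Hq).
    pose proof (Cmod_ge_0 a). pose proof (Cmod_ge_0 (q ^ n)). nra.
Qed.

Definition qfac (q : C) n := qpoch q q n.

Lemma qfac_S q n : qfac q (S n) = qfac q n * (1 - q ^ S n).
Proof. unfold qfac. rewrite qpoch_S, Cpow_S. auto. Qed.

Lemma qfac_neq0 q n : (Cmod q < 1)%R -> qfac q n <> 0.
Proof. intros. apply qpoch_neq0; lra. Qed.

Lemma qfac_add q n m : qfac q (n + m) = qfac q n * qpoch (q ^ S n) q m.
Proof. unfold qfac. rewrite qpoch_add, Cpow_S. auto. Qed.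

Fixpoint tri n := match n with O => O | S m => (tri m + m)%nat end.

Lemma tri_double r : (2 * tri r + r = r * r)%nat.
Proof. induction r; simpl; nia. Qed.

Lemma tri_S_of_eq a b : a = S b -> tri a = (tri b + b)%nat.
Proof. intros; subst; reflexivity. Qed.

Definition qbin (q : C) n k : C :=
  if Nat.leb k n then qfac q n / (qfac q k * qfac q (n - k)) else 0.

Lemma qbin_gt q n k : (n < k)%nat -> qbin q n k = 0.
Proof. intros H. unfold qbin. destruct (Nat.leb_spec k n); [lia|auto]. Qed.

Lemma qbin_le q n k : (k <= n)%nat -> qbin q n k = qfac q n / (qfac q k * qfac q (n - k)).
Proof. intros H. unfold qbin. destruct (Nat.leb_spec k n); [auto|lia]. Qed.

Lemma qbin_0 q n : (Cmod q < 1)%R -> qbin q n 0 = 1.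
Proof.
  intros. rewrite qbin_le, Nat.sub_0_r by lia. unfold qfac at 2. rewrite qpoch_0.
  field. apply qfac_neq0; auto.
Qed.

Lemma qbin_diag q n : (Cmod q < 1)%R -> qbin q n n = 1.
Proof.
  intros. rewrite qbin_le, Nat.sub_diag by lia. unfold qfac at 3. rewrite qpoch_0.
  field. apply qfac_neq0; auto.
Qed.

Lemma qbin_sym_even q n r : (r <= n)%nat -> qbin q (2 * n) (n - r) = qbin q (2 * n) (n + r).
Proof.
  intros H. rewrite !qbin_le by lia.
  replace (2 * n - (n - r))%nat with (n + r)%nat by lia.
  replace (2 * n - (n + r))%nat with (n - r)%nat by lia. f_equal. ring.
Qed.

Lemma qbin_sym_odd q n r :
  (r <= n)%nat -> qbin q (2 * n + 1) (n - r) = qbin q (2 * n + 1) (n + 1 + r).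
Proof.
  intros H. rewrite !qbin_le by lia.
  replace (2 * n + 1 - (n - r))%nat with (n + 1 + r)%nat by lia.
  replace (2 * n + 1 - (n + 1 + r))%nat with (n - r)%nat by lia. f_equal. ring.
Qed.

(* Both q-Pascal rules, in the generic case k < n, reduce to one rational identity. *)
Lemma qbin_pascal_generic q k d : (Cmod q < 1)%R ->
  qfac q (S (S k + d)) / (qfac q (S k) * qfac q (S d)) =
    qfac q (S k + d) / (qfac q k * qfac q (S d))
    + q ^ S k * (qfac q (S k + d) / (qfac q (S k) * qfac q d))
  /\ qfac q (S (S k + d)) / (qfac q (S k) * qfac q (S d)) =
    q ^ S d * (qfac q (S k + d) / (qfac q k * qfac q (S d)))
    + qfac q (S k + d) / (qfac q (S k) * qfac q d).
Proof.
  intros Hq. rewrite !qfac_S.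
  replace (q ^ S (S k + d)) with (q ^ S k * q ^ S d) by (rewrite <- Cpow_add_r; f_equal; lia).
  assert (N1 := qfac_neq0 q k Hq). assert (N2 := qfac_neq0 q d Hq).
  assert (N3 := one_minus_neq0 _ (Cmod_pow_S_lt1 q k Hq)).
  assert (N4 := one_minus_neq0 _ (Cmod_pow_S_lt1 q d Hq)).
  split; field; repeat split; auto.
Qed.

Lemma qbin_pascal1 q n k : (Cmod q < 1)%R ->
  qbin q (S n) (S k) = qbin q n k + q ^ S k * qbin q n (S k).
Proof.
  intros Hq. destruct (Nat.lt_trichotomy k n) as [H|[H|H]].
  - rewrite !qbin_le by lia. replace n with (S k + (n - S k))%nat by lia.
    set (d := (n - S k)%nat).
    replace (S (S k + d) - S k)%nat with (S d) by lia.
    replace (S k + d - k)%nat with (S d) by lia.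
    replace (S k + d - S k)%nat with d by lia.
    apply (qbin_pascal_generic q k d Hq).
  - subst. rewrite qbin_diag, qbin_diag, qbin_gt by (auto; lia). ring.
  - rewrite !qbin_gt by lia. ring.
Qed.

Lemma qbin_pascal2 q n k : (Cmod q < 1)%R ->
  qbin q (S n) (S k) = q ^ (n - k) * qbin q n k + qbin q n (S k).
Proof.
  intros Hq. destruct (Nat.lt_trichotomy k n) as [H|[H|H]].
  - rewrite !qbin_le by lia. replace n with (S k + (n - S k))%nat by lia.
    set (d := (n - S k)%nat).
    replace (S (S k + d) - S k)%nat with (S d) by lia.
    replace (S k + d - k)%nat with (S d) by lia.
    replace (S k + d - S k)%nat with d by lia.
    apply (qbin_pascal_generic q k d Hq).
  - subst. rewrite qbin_diag, qbin_diag, qbin_gt, Nat.sub_diag by (auto; lia). simpl. ring.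
  - rewrite !qbin_gt by lia. ring.
Qed.

Lemma qbin_S_pascal1 q n k : (Cmod q < 1)%R ->
  qbin q (S n) k = q ^ k * qbin q n k + match k with O => 0 | S j => qbin q n j end.
Proof.
  intros Hq. destruct k.
  - rewrite !qbin_0 by auto. simpl. ring.
  - rewrite qbin_pascal1 by auto. ring.
Qed.

Lemma qbin_S_pascal2 q n k : (Cmod q < 1)%R ->
  qbin q (S n) k = qbin q n k + match k with O => 0 | S j => q ^ (n - j) * qbin q n j end.
Proof.
  intros Hq. destruct k.
  - rewrite !qbin_0 by auto. ring.
  - rewrite qbin_pascal2 by auto. ring.
Qed.

Lemma qbinomial q z N : (Cmod q < 1)%R ->
  csum (fun k => qbin q N k * q ^ tri k * z ^ k) (S N) = qpoch (- z) q N.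
Proof.
  intros Hq. induction N.
  - simpl. rewrite qbin_0 by auto. ring.
  - rewrite (csum_ext _ _ (fun k => qbin q N k * q ^ tri k * z ^ k +
        match k with O => 0 | S j => q ^ (N - j) * qbin q N j * q ^ tri (S j) * z ^ S j end))
      by (intros k _; rewrite qbin_S_pascal2 by auto; destruct k; ring).
    rewrite csum_pascal_split, IHN by (rewrite qbin_gt by lia; ring).
    rewrite (csum_ext _ _ (fun j => (z * q ^ N) * (qbin q N j * q ^ tri j * z ^ j))).
    + rewrite csum_scal_l, IHN, qpoch_S. ring.
    + intros j Hj. simpl tri. rewrite Cpow_S.
      replace (q ^ (tri j + j)) with (q ^ tri j * q ^ j) by (rewrite <- Cpow_add_r; reflexivity).
      replace (q ^ N) with (q ^ (N - j) * q ^ j) by (rewrite <- Cpow_add_r; f_equal; lia).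
      ring.
Qed.

(** * An alternating q-binomial sum and a finite Durfee identity *)

(* [tri_shift m k] is the triangular number T(k - m) = (k - m)(k - m - 1)/2 for
   the integer k - m; for k < m this is T(m - k + 1). *)
Definition tri_shift m k := if Nat.leb m k then tri (k - m) else tri (S (m - k)).

Lemma tri_shift_step m j N : (j <= N)%nat -> (m <= N)%nat ->
  (N - j + tri_shift m (S j) = N - m + tri_shift m j)%nat.
Proof.
  intros H1 H2. unfold tri_shift.
  destruct (Nat.leb_spec m (S j)); destruct (Nat.leb_spec m j).
  - rewrite (tri_S_of_eq (S j - m) (j - m)) by lia. lia.
  - replace m with (S j) by lia. rewrite Nat.sub_diag.
    replace (S j - j)%nat with 1%nat by lia. simpl. lia.
  - lia.
  - rewrite (tri_S_of_eq (S (m - j)) (m - j)) by lia.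
    rewrite (tri_S_of_eq (m - j) (m - S j)) by lia.
    replace (S (m - S j)) with (m - j)%nat by lia.
    rewrite (tri_S_of_eq (m - j) (m - S j)) by lia. lia.
Qed.

Lemma tri_shift_S_l m k : (k + tri_shift (S m) k = S m + tri_shift m k)%nat.
Proof.
  unfold tri_shift.
  destruct (Nat.leb_spec (S m) k); destruct (Nat.leb_spec m k).
  - rewrite (tri_S_of_eq (k - m) (k - S m)) by lia. lia.
  - lia.
  - replace k with m by lia. rewrite Nat.sub_diag.
    replace (S m - m)%nat with 1%nat by lia. simpl. lia.
  - rewrite (tri_S_of_eq (S (S m - k)) (S m - k)) by lia.
    replace (S m - k)%nat with (S (m - k)) by lia. lia.
Qed.

Definition alt_qbin_sum q N m x :=
  csum (fun k => qbin q N k * (-1) ^ k * q ^ (tri_shift m k) * x ^ k) (S N).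

Fixpoint qprod_sub (q x : C) m : C :=
  match m with O => 1 | S m' => qprod_sub q x m' * (q ^ S m' - x) end.

Lemma alt_qbin_sum_S q N m x : (Cmod q < 1)%R -> (m <= N)%nat ->
  alt_qbin_sum q (S N) m x = (1 - x * q ^ (N - m)) * alt_qbin_sum q N m x.
Proof.
  intros Hq Hm. unfold alt_qbin_sum.
  rewrite (csum_ext _ _ (fun k => qbin q N k * (-1) ^ k * q ^ (tri_shift m k) * x ^ k +
      match k with
      | O => 0
      | S j => q ^ (N - j) * qbin q N j * (-1) ^ S j * q ^ (tri_shift m (S j)) * x ^ S j
      end))
    by (intros k _; rewrite qbin_S_pascal2 by auto; destruct k; ring).
  rewrite csum_pascal_split by (rewrite qbin_gt by lia; ring).
  fold (alt_qbin_sum q N m x).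
  rewrite (csum_ext _ _ (fun j => (- x * q ^ (N - m)) *
                                  (qbin q N j * (-1) ^ j * q ^ (tri_shift m j) * x ^ j))).
  - rewrite csum_scal_l. fold (alt_qbin_sum q N m x). ring.
  - intros j Hj.
    assert (E : q ^ (N - j) * q ^ (tri_shift m (S j)) = q ^ (N - m) * q ^ (tri_shift m j))
      by (rewrite <- !Cpow_add_r; f_equal; apply tri_shift_step; lia).
    rewrite !Cpow_S.
    transitivity (- (q ^ (N - j) * q ^ (tri_shift m (S j))) * qbin q N j * (-1) ^ j * x * x ^ j);
      [ring|].
    rewrite E. ring.
Qed.

Lemma alt_qbin_sum_diag q m x : (Cmod q < 1)%R -> alt_qbin_sum q m m x = qprod_sub q x m.
Proof.
  intros Hq. induction m.
  - unfold alt_qbin_sum. simpl. rewrite qbin_0 by auto. unfold tri_shift. simpl. ring.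
  - simpl qprod_sub. rewrite <- IHm. unfold alt_qbin_sum.
    rewrite (csum_ext _ _ (fun k => q ^ k * qbin q m k * (-1) ^ k * q ^ (tri_shift (S m) k) * x ^ k +
        match k with
        | O => 0
        | S j => qbin q m j * (-1) ^ S j * q ^ (tri_shift (S m) (S j)) * x ^ S j
        end))
      by (intros k _; rewrite qbin_S_pascal1 by auto; destruct k; ring).
    rewrite csum_pascal_split by (rewrite qbin_gt by lia; ring).
    rewrite (csum_ext (S m) (fun k => q ^ k * qbin q m k * (-1) ^ k * q ^ (tri_shift (S m) k) * x ^ k)
       (fun k => q ^ S m * (qbin q m k * (-1) ^ k * q ^ (tri_shift m k) * x ^ k))).
    2: { intros k Hk.
      assert (E : q ^ k * q ^ (tri_shift (S m) k) = q ^ S m * q ^ (tri_shift m k))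
        by (rewrite <- !Cpow_add_r; f_equal; apply tri_shift_S_l).
      transitivity ((q ^ k * q ^ (tri_shift (S m) k)) * qbin q m k * (-1) ^ k * x ^ k); [ring|].
      rewrite E. ring. }
    rewrite (csum_ext (S m) (fun j => qbin q m j * (-1) ^ S j * q ^ (tri_shift (S m) (S j)) * x ^ S j)
       (fun j => - x * (qbin q m j * (-1) ^ j * q ^ (tri_shift m j) * x ^ j)))
      by (intros j Hj; rewrite !Cpow_S; change (tri_shift (S m) (S j)) with (tri_shift m j); ring).
    rewrite !csum_scal_l, Cpow_S. ring.
Qed.

Lemma alt_qbin_sum_eq q N m x : (Cmod q < 1)%R -> (m <= N)%nat ->
  alt_qbin_sum q N m x = qprod_sub q x m * qpoch x q (N - m).
Proof.
  intros Hq Hm. replace N with (m + (N - m))%nat by lia.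
  generalize (N - m)%nat. clear N Hm. intros d. induction d.
  - rewrite Nat.add_0_r, Nat.sub_diag, qpoch_0, alt_qbin_sum_diag by auto. ring.
  - rewrite Nat.add_succ_r, alt_qbin_sum_S, IHd by (auto; lia).
    replace (S (m + d) - m)%nat with (S d) by lia. replace (m + d - m)%nat with d by lia.
    rewrite qpoch_S. ring.
Qed.

Lemma qprod_sub_factor p z w n : z * w = p -> qprod_sub p z n = (- z) ^ n * qpoch w p n.
Proof.
  intros E. induction n.
  - rewrite qpoch_0. simpl. ring.
  - simpl qprod_sub. rewrite IHn, qpoch_S, <- E, ?Cpow_S, ?Cpow_mult_l. ring.
Qed.

Definition durfee_sum q A x :=
  csum (fun m => qbin q A m * q ^ (m * m) * x ^ m * qpoch (x * q ^ S m) q (A - m)) (S A).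

Lemma durfee_sum_1 q A x : (Cmod q < 1)%R -> durfee_sum q A x = 1.
Proof.
  intros Hq. revert x. induction A; intros x.
  - unfold durfee_sum. simpl. rewrite qbin_0 by auto. ring.
  - unfold durfee_sum.
    rewrite (csum_ext _ _ (fun m =>
        q ^ m * qbin q A m * q ^ (m * m) * x ^ m * qpoch (x * q ^ S m) q (S A - m) +
        match m with
        | O => 0
        | S j => qbin q A j * q ^ (S j * S j) * x ^ S j * qpoch (x * q ^ S (S j)) q (S A - S j)
        end))
      by (intros k _; rewrite qbin_S_pascal1 by auto; destruct k; ring).
    rewrite csum_pascal_split by (rewrite qbin_gt by lia; ring).
    set (P := fun m => qbin q A m * q ^ (m * m) * (x * q) ^ m * qpoch ((x * q) * q ^ S m) q (A - m)).
    set (Q := fun m => qbin q A m * q ^ (m * m) * (x * q) ^ m * (x * q ^ S m)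
                       * qpoch ((x * q) * q ^ S m) q (A - m)).
    (* split off the first factor of each Pochhammer symbol: the Q-parts telescope *)
    rewrite (csum_ext (S A) _ (fun m => P m - Q m)).
    2: { intros m Hm. unfold P, Q.
      replace (S A - m)%nat with (S (A - m)) by lia. rewrite qpoch_S_front, Cpow_mult_l.
      replace (x * q ^ S m * q) with (x * q * q ^ S m) by ring. ring. }
    rewrite (csum_ext (S A)
      (fun j => qbin q A j * q ^ (S j * S j) * x ^ S j * qpoch (x * q ^ S (S j)) q (S A - S j)) Q).
    2: { intros j Hj. unfold Q.
      replace (S A - S j)%nat with (A - j)%nat by lia.
      replace (x * q ^ S (S j)) with (x * q * q ^ S j) by (rewrite (Cpow_S q (S j)); ring).
      replace (S j * S j)%nat with (j * j + j + S j)%nat by nia.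
      rewrite !Cpow_add_r, Cpow_mult_l, (Cpow_S x j). ring. }
    rewrite csum_minus. change (csum P (S A)) with (durfee_sum q A (x * q)).
    rewrite IHA. ring.
Qed.

Definition theta_mono p x r : C := (-1) ^ r * p ^ tri r * x ^ r.

(* The terms of index r and -r of the bilateral theta series
   sum_{r in Z} (-1)^r p^T(r) z^r, grouped together using w = p / z. *)
Definition jtp_term p z w r : C :=
  theta_mono p z r + (if Nat.eqb r 0 then 0 else theta_mono p w r).

Lemma alt_qbin_sum_central q n z w : z * w = q ->
  alt_qbin_sum q (2 * n) n z =
  (- z) ^ n * csum (fun r => qbin q (2 * n) (n + r) * jtp_term q z w r) (S n).
Proof.
  intros E. unfold alt_qbin_sum.
  set (f := fun k => qbin q (2 * n) k * (-1) ^ k * q ^ tri_shift n k * z ^ k).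
  rewrite csum_fold_odd, <- csum_scal_l, !csum_S_shift, Nat.add_0_r, Nat.sub_0_r.
  assert (T0 : (- z) ^ n * (qbin q (2 * n) n * jtp_term q z w 0) = f n).
  { unfold jtp_term, theta_mono, f, tri_shift. rewrite Nat.leb_refl, Nat.sub_diag, Cpow_opp.
    simpl. ring. }
  assert (TS : forall r, (r < n)%nat -> f (n + S r)%nat + f (n - S r)%nat =
                 (- z) ^ n * (qbin q (2 * n) (n + S r) * jtp_term q z w (S r))).
  { intros r Hr. unfold f, tri_shift, jtp_term, theta_mono.
    rewrite qbin_sym_even, Cpow_m1_sub by lia.
    destruct (Nat.leb_spec n (n + S r)); [|lia].
    destruct (Nat.leb_spec n (n - S r)); [lia|].
    replace (n + S r - n)%nat with (S r) by lia.
    replace (S (n - (n - S r))) with (S (S r)) by lia.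
    rewrite (tri_S_of_eq (S (S r)) (S r)), !Cpow_add_r, Cpow_opp by auto. simpl Nat.eqb.
    replace (q ^ S r) with (z ^ S r * w ^ S r) by (rewrite <- E; symmetry; apply Cpow_mult_l).
    replace (z ^ n) with (z ^ (n - S r) * z ^ S r) by (rewrite <- Cpow_add_r; f_equal; lia).
    ring. }
  rewrite (csum_ext n _ _ TS), <- T0. ring.
Qed.

Lemma jtp_finite p z w n : (Cmod p < 1)%R -> z * w = p -> z <> 0 ->
  qpoch z p n * qpoch w p n = csum (fun r => qbin p (2 * n) (n + r) * jtp_term p z w r) (S n).
Proof.
  intros Hp E Hz.
  assert (L := alt_qbin_sum_eq p (2 * n) n z Hp ltac:(lia)).
  rewrite (alt_qbin_sum_central p n z w E), (qprod_sub_factor p z w n E) in L.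
  replace (2 * n - n)%nat with n in L by lia.
  apply (Cmult_cancel_l ((- z) ^ n)).
  - apply Cpow_nz. intro X. apply Hz. replace z with (- - z) by ring. rewrite X. ring.
  - rewrite L. ring.
Qed.

(** * Bailey pairs *)

(* (al, be) is a Bailey pair relative to a = q^s. *)
Definition bailey_pair q s (al be : nat -> C) : Prop :=
  forall n, be n = csum (fun r => al r / (qfac q (n - r) * qfac q (n + r + s))) (S n).

Lemma bailey_inner_sum q s n r : (Cmod q < 1)%R -> (r <= n)%nat ->
  csum (fun m => q ^ ((r + m) * (r + m) + s * (r + m)) /
        (qfac q (n - (r + m)) * qfac q (r + m - r) * qfac q (r + m + r + s))) (S (n - r))
  = q ^ (r * r + s * r) / (qfac q (n - r) * qfac q (n + r + s)).
Proof.
  intros Hq Hr.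
  set (A := (n - r)%nat). set (x := q ^ (2 * r + s)).
  rewrite (csum_ext _ _ (fun m => (q ^ (r * r + s * r) / (qfac q A * qfac q (n + r + s))) *
      (qbin q A m * q ^ (m * m) * x ^ m * qpoch (x * q ^ S m) q (A - m)))).
  - rewrite csum_scal_l. change (csum _ (S A)) with (durfee_sum q A x).
    rewrite durfee_sum_1 by auto. ring.
  - intros m Hm. unfold A in *.
    replace (n - (r + m))%nat with (n - r - m)%nat by lia.
    replace (r + m - r)%nat with m by lia.
    replace (r + m + r + s)%nat with (2 * r + s + m)%nat by lia.
    rewrite qbin_le by lia.
    unfold x. rewrite <- Cpow_mult_r, <- Cpow_add_r.
    replace (2 * r + s + S m)%nat with (S (2 * r + s + m)) by lia.
    assert (Z : qpoch (q ^ S (2 * r + s + m)) q (n - r - m)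
                = qfac q (n + r + s) / qfac q (2 * r + s + m)).
    { replace (n + r + s)%nat with (2 * r + s + m + (n - r - m))%nat by lia.
      rewrite qfac_add. field. apply qfac_neq0; auto. }
    rewrite Z.
    replace (q ^ ((r + m) * (r + m) + s * (r + m)))
      with (q ^ (r * r + s * r) * q ^ (m * m) * q ^ ((2 * r + s) * m))
      by (rewrite <- !Cpow_add_r; f_equal; nia).
    field. repeat split; apply qfac_neq0; auto.
Qed.

Lemma bailey_lemma q s al be : (Cmod q < 1)%R -> bailey_pair q s al be ->
  bailey_pair q s (fun r => q ^ (r * r + s * r) * al r)
    (fun n => csum (fun j => q ^ (j * j + s * j) * be j / qfac q (n - j)) (S n)).
Proof.
  intros Hq Hp n.
  rewrite (csum_ext _ _ (fun j => csum (fun r => q ^ (j * j + s * j) / qfac q (n - j) *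
       (al r / (qfac q (j - r) * qfac q (j + r + s)))) (S j))).
  2: { intros j Hj. rewrite (Hp j), !csum_scal_l. field. apply qfac_neq0; auto. }
  rewrite csum_triangle_swap. apply csum_ext. intros r Hr.
  rewrite (csum_ext _ _ (fun m => al r * (q ^ ((r + m) * (r + m) + s * (r + m)) /
        (qfac q (n - (r + m)) * qfac q (r + m - r) * qfac q (r + m + r + s))))).
  - rewrite csum_scal_l, bailey_inner_sum by (auto; lia). field. split; apply qfac_neq0; auto.
  - intros m Hm. field. repeat split; apply qfac_neq0; auto.
Qed.

Definition delta0 (n : nat) : C := if Nat.eqb n 0 then 1 else 0.

Definition unit_alpha0 q r : C := jtp_term q 1 q r.

Definition unit_alpha1 q r : C := (-1) ^ r * q ^ tri r * (1 - q ^ (2 * r + 1)).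

Lemma qpoch_1_S q n : qpoch 1 q (S n) = 0.
Proof. rewrite qpoch_S_front. ring. Qed.

(* Both unit pairs come from the vanishing of alt_qbin_sum at x = 1. *)
Lemma bailey_pair_unit0 q : (Cmod q < 1)%R -> bailey_pair q 0 (unit_alpha0 q) delta0.
Proof.
  intros Hq [|n'].
  - unfold unit_alpha0, jtp_term, theta_mono, delta0, qfac. simpl. field.
  - set (n := S n').
    assert (L := alt_qbin_sum_eq q (2 * n) n 1 Hq ltac:(lia)).
    replace (2 * n - n)%nat with (S n') in L by (unfold n; lia).
    rewrite qpoch_1_S, Cmult_0_r, (alt_qbin_sum_central q n 1 q) in L by ring.
    replace (Copp (RtoC 1)) with (RtoC (-1)) in L by ring.
    unfold delta0. simpl Nat.eqb. cbv iota. symmetry.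
    apply (Cmult_cancel_l ((-1) ^ n * qfac q (2 * n))).
    { apply Cmult_neq_0; [apply Cpow_nz; intro X; injection X; lra|apply qfac_neq0; auto]. }
    rewrite Cmult_0_r, <- L, <- Cmult_assoc, <- !csum_scal_l. apply csum_ext. intros r Hr.
    unfold unit_alpha0. rewrite Nat.add_0_r, qbin_le by lia.
    replace (2 * n - (n + r))%nat with (n - r)%nat by lia.
    field. split; apply qfac_neq0; auto.
Qed.

Lemma bailey_pair_unit1 q : (Cmod q < 1)%R -> bailey_pair q 1 (unit_alpha1 q) delta0.
Proof.
  intros Hq [|n'].
  - unfold unit_alpha1, delta0. simpl. unfold qfac. rewrite !qpoch_S, qpoch_0. simpl. field.
    replace (1 - q * 1) with (1 - q) by ring. apply one_minus_neq0; auto.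
  - set (n := S n').
    assert (L := alt_qbin_sum_eq q (2 * n + 1) (n + 1) 1 Hq ltac:(lia)).
    replace (2 * n + 1 - (n + 1))%nat with (S n') in L by (unfold n; lia).
    rewrite qpoch_1_S, Cmult_0_r in L.
    unfold alt_qbin_sum in L. replace (S (2 * n + 1)) with (2 * n + 2)%nat in L by lia.
    rewrite csum_fold_even in L.
    unfold delta0. simpl Nat.eqb. cbv iota. symmetry.
    apply (Cmult_cancel_l ((-1) ^ (n + 1) * qfac q (2 * n + 1))).
    { apply Cmult_neq_0; [apply Cpow_nz; intro X; injection X; lra|apply qfac_neq0; auto]. }
    rewrite Cmult_0_r, <- L, <- csum_scal_l. apply csum_ext. intros r Hr.
    rewrite qbin_sym_odd, !Cpow_1_l, Cpow_m1_sub by lia.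
    unfold tri_shift. destruct (Nat.leb_spec (n + 1) (n + 1 + r)); [|lia].
    destruct (Nat.leb_spec (n + 1) (n - r)); [lia|].
    replace (n + 1 + r - (n + 1))%nat with r by lia.
    replace (S (n + 1 - (n - r))) with (S (S r)) by lia.
    rewrite (tri_S_of_eq (S (S r)) (S r)), (tri_S_of_eq (S r) r) by auto.
    unfold unit_alpha1. rewrite qbin_le by lia.
    replace (2 * n + 1 - (n + 1 + r))%nat with (n - r)%nat by lia.
    replace (n + r + 1)%nat with (n + 1 + r)%nat by lia.
    replace (2 * r + 1)%nat with (r + S r)%nat by lia. rewrite !Cpow_add_r.
    simpl Cpow. field. split; apply qfac_neq0; auto.
Qed.

Lemma bailey_lemma_twice q s al : (Cmod q < 1)%R -> bailey_pair q s al delta0 -> forall N,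
  csum (fun j => q ^ (j * j + s * j) / (qfac q j * qfac q (N - j))) (S N) =
  csum (fun r => q ^ (r * r + s * r) * (q ^ (r * r + s * r) * al r)
                 / (qfac q (N - r) * qfac q (N + r + s))) (S N).
Proof.
  intros Hq Hp N.
  rewrite <- (bailey_lemma q s _ _ Hq (bailey_lemma q s _ _ Hq Hp) N).
  apply csum_ext. intros j Hj.
  rewrite csum_S_shift, csum_eq0.
  - unfold delta0. simpl Nat.eqb. cbv iota. rewrite Nat.sub_0_r, !Nat.mul_0_r. simpl Cpow.
    field. split; apply qfac_neq0; auto.
  - intros k Hk. unfold delta0. simpl Nat.eqb. cbv iota. unfold Cdiv. ring.
Qed.

(** * Estimates for q-Pochhammer symbols *)

Fixpoint rprod (f : nat -> R) (n : nat) : R :=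
  match n with O => 1%R | S m => (rprod f m * f m)%R end.

Lemma rprod_nonneg f n : (forall k, 0 <= f k)%R -> (0 <= rprod f n)%R.
Proof. intros H. induction n; simpl. lra. specialize (H n). nra. Qed.

Lemma exp_le_exp x y : (x <= y)%R -> (exp x <= exp y)%R.
Proof. intros [H|H]; [left; apply exp_increasing; auto|subst; lra]. Qed.

Lemma rprod_le_exp A t n : (0 <= A)%R -> (0 <= t < 1)%R ->
  (rprod (fun k => 1 + A * t ^ k) n <= exp (A / (1 - t)))%R.
Proof.
  intros HA Ht.
  assert (G : forall n, (rprod (fun k => 1 + A * t ^ k) n <= exp (A * rsum (fun k => t ^ k) n))%R).
  { induction n0; simpl. rewrite Rmult_0_r, exp_0. lra.
    rewrite (Rmult_plus_distr_l A), exp_plus.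
    apply Rmult_le_compat; auto.
    - apply rprod_nonneg. intros. pose proof (pow_le t k ltac:(lra)). nra.
    - pose proof (pow_le t n0 ltac:(lra)). nra.
    - apply exp_ineq1_le. }
  eapply Rle_trans; [apply G|]. apply exp_le_exp.
  unfold Rdiv. replace (A * / (1 - t))%R with (A * (1 / (1 - t)))%R by (field; lra).
  apply Rmult_le_compat_l; auto. apply rsum_geom_le; auto.
Qed.

Lemma Cmod_qpoch_le_exp a q n : (Cmod q < 1)%R ->
  (Cmod (qpoch a q n) <= exp (Cmod a / (1 - Cmod q)))%R.
Proof.
  intros Hq. apply Rle_trans with (rprod (fun k => 1 + Cmod a * Cmod q ^ k) n)%R.
  - induction n. rewrite qpoch_0, Cmod_1. simpl. lra.
    rewrite qpoch_S. simpl rprod. rewrite Cmod_mult.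
    apply Rmult_le_compat; auto; try apply Cmod_ge_0.
    eapply Rle_trans; [apply Cmod_triangle|]. rewrite Cmod_opp, Cmod_1, Cmod_mult, Cmod_pow. lra.
  - apply rprod_le_exp; [apply Cmod_ge_0|split; [apply Cmod_ge_0|auto]].
Qed.

Lemma Cmod_qpoch_sub1_le b q m : (Cmod q < 1)%R ->
  (Cmod (qpoch b q m - 1) <= exp (Cmod b / (1 - Cmod q)) - 1)%R.
Proof.
  intros Hq. set (t := Cmod q). assert (Ht : (0 <= t < 1)%R) by (split; [apply Cmod_ge_0|auto]).
  enough (G : (Cmod (qpoch b q m - 1) <= rprod (fun k => 1 + Cmod b * t ^ k) m - 1)%R)
    by (pose proof (rprod_le_exp (Cmod b) t m (Cmod_ge_0 b) Ht); lra).
  induction m.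
  - rewrite qpoch_0. replace (1 - 1) with (RtoC 0) by ring. rewrite Cmod_0. simpl. lra.
  - rewrite qpoch_S. simpl rprod.
    replace (qpoch b q m * (1 - b * q ^ m) - 1)
      with ((qpoch b q m - 1) * (1 - b * q ^ m) + - (b * q ^ m)) by ring.
    eapply Rle_trans; [apply Cmod_triangle|].
    rewrite Cmod_mult, Cmod_opp, Cmod_mult, Cmod_pow. fold t.
    assert (H1 : (Cmod (1 - b * q ^ m) <= 1 + Cmod b * t ^ m)%R).
    { eapply Rle_trans; [apply Cmod_triangle|].
      rewrite Cmod_opp, Cmod_1, Cmod_mult, Cmod_pow. fold t. lra. }
    assert (H2 : (Cmod (qpoch b q m - 1) * Cmod (1 - b * q ^ m) <=
             (rprod (fun k => 1 + Cmod b * t ^ k) m - 1) * (1 + Cmod b * t ^ m))%R)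
      by (apply Rmult_le_compat; auto; apply Cmod_ge_0).
    nra.
Qed.

Lemma geom_eventually_lt (t K eps : R) : (0 <= t < 1)%R -> (0 <= K)%R -> (0 < eps)%R ->
  exists N, forall n, (N <= n)%nat -> (K * t ^ n < eps)%R.
Proof.
  intros Ht HK He.
  destruct (pow_lt_1_zero t ltac:(rewrite Rabs_pos_eq; lra) (eps / (K + 1))) as [N HN].
  { apply Rdiv_lt_0_compat; lra. }
  exists N. intros n Hn. specialize (HN n Hn). rewrite Rabs_pos_eq in HN by (apply pow_le; lra).
  apply Rle_lt_trans with ((K + 1) * t ^ n)%R. pose proof (pow_le t n ltac:(lra)). nra.
  apply Rmult_lt_reg_l with (/ (K + 1))%R. apply Rinv_0_lt_compat; lra.
  rewrite <- Rmult_assoc, Rinv_l, Rmult_1_l by lra. unfold Rdiv in HN. lra.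
Qed.

Lemma exp_neg_div_le y t : (0 <= y <= t)%R -> (t < 1)%R -> (exp (- (y / (1 - t))) <= 1 - y)%R.
Proof.
  intros Hy Ht. rewrite exp_Ropp.
  assert (E := exp_ineq1_le (y / (1 - t))).
  assert (P : (0 < exp (y / (1 - t)))%R) by apply exp_pos.
  apply Rmult_le_reg_l with (exp (y / (1 - t))); auto.
  rewrite Rinv_r by lra.
  apply Rle_trans with ((1 + y / (1 - t)) * (1 - y))%R.
  - replace ((1 + y / (1 - t)) * (1 - y))%R with (1 + y * (t - y) / (1 - t))%R by (field; lra).
    assert (0 <= y * (t - y) / (1 - t))%R by (apply Rdiv_le_0_compat; nra). lra.
  - apply Rmult_le_compat_r; lra.
Qed.

Definition qfac_lb (t : R) : R := exp (- (1 / ((1 - t) * (1 - t)))).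

Lemma qfac_lb_pos t : (0 < qfac_lb t)%R.
Proof. apply exp_pos. Qed.

Lemma Cmod_qfac_ge q n : (Cmod q < 1)%R -> (qfac_lb (Cmod q) <= Cmod (qfac q n))%R.
Proof.
  intros Hq. set (t := Cmod q). assert (Ht : (0 <= t < 1)%R) by (split; [apply Cmod_ge_0|auto]).
  assert (G : forall n, (exp (- (rsum (fun k => t ^ S k) n / (1 - t))) <= Cmod (qfac q n))%R).
  { induction n0.
    - simpl. unfold qfac. rewrite qpoch_0, Cmod_1. unfold Rdiv.
      rewrite Rmult_0_l, Ropp_0, exp_0. lra.
    - rewrite qfac_S, Cmod_mult, rsum_S.
      replace (- ((rsum (fun k => t ^ S k) n0 + t ^ S n0) / (1 - t)))%R
        with (- (rsum (fun k => t ^ S k) n0 / (1 - t)) + - (t ^ S n0 / (1 - t)))%R by (field; lra).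
      rewrite exp_plus. apply Rmult_le_compat; try (left; apply exp_pos); auto.
      apply Rle_trans with (1 - t ^ S n0)%R.
      + apply exp_neg_div_le; [|lra]. split; [apply pow_le; lra|].
        rewrite <- (pow_1 t) at 2. apply pow_le_decr; [lra|lia].
      + pose proof (Cmod_triangle (1 - q ^ S n0) (q ^ S n0)) as T.
        replace (1 - q ^ S n0 + q ^ S n0) with (RtoC 1) in T by ring.
        rewrite Cmod_1, Cmod_pow in T. fold t in T. lra. }
  eapply Rle_trans; [|apply G]. unfold qfac_lb. apply exp_le_exp, Ropp_le_contravar.
  assert (S1 : (rsum (fun k => t ^ S k) n <= 1 / (1 - t))%R).
  { apply Rle_trans with (rsum (fun k => t ^ k)%R n); [|apply rsum_geom_le; auto].
    apply rsum_le. intros k _. apply pow_le_decr; [lra|lia]. }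
  replace (1 / ((1 - t) * (1 - t)))%R with ((1 / (1 - t)) / (1 - t))%R by (field; lra).
  unfold Rdiv. apply Rmult_le_compat_r; [apply Rlt_le, Rinv_0_lt_compat; lra|]. unfold Rdiv in S1. lra.
Qed.

Lemma Cmod_inv_qfac_le q n : (Cmod q < 1)%R -> (Cmod (/ qfac q n) <= / qfac_lb (Cmod q))%R.
Proof.
  intros Hq. rewrite Cmod_inv by (apply qfac_neq0; auto).
  apply Rinv_le_contravar; [apply qfac_lb_pos|apply Cmod_qfac_ge; auto].
Qed.

Lemma exp_sub1_le x : (0 <= x)%R -> (exp x - 1 <= x * exp x)%R.
Proof.
  intros H. assert (E := exp_ineq1_le (- x)). rewrite exp_Ropp in E.
  assert (P := exp_pos x).
  apply Rmult_le_compat_r with (r := exp x) in E; [|lra].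
  rewrite Rinv_l in E by lra. nra.
Qed.

(* The tail factor (a q^n; q)_m is within O(|q|^n) of 1, uniformly in m. *)
Lemma Cmod_qpoch_add_sub_le a q n m : (Cmod q < 1)%R ->
  (Cmod (qpoch a q (n + m) - qpoch a q n)
   <= (exp (Cmod a / (1 - Cmod q)) * exp (Cmod a / (1 - Cmod q)) * (Cmod a / (1 - Cmod q)))
      * Cmod q ^ n)%R.
Proof.
  intros Hq. set (t := Cmod q). assert (Ht : (0 <= t < 1)%R) by (split; [apply Cmod_ge_0|auto]).
  set (X := (Cmod a / (1 - t))%R). set (Bd := exp X).
  assert (HX : (0 <= X)%R) by (apply Rdiv_le_0_compat; [apply Cmod_ge_0|lra]).
  rewrite qpoch_add.
  replace (qpoch a q n * qpoch (a * q ^ n) q m - qpoch a q n)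
    with (qpoch a q n * (qpoch (a * q ^ n) q m - 1)) by ring.
  rewrite Cmod_mult.
  assert (B1 : (Cmod (qpoch a q n) <= Bd)%R) by apply Cmod_qpoch_le_exp, Hq.
  assert (B2 := Cmod_qpoch_sub1_le (a * q ^ n) q m Hq).
  rewrite Cmod_mult, Cmod_pow in B2. fold t in B2.
  set (y := (Cmod a * t ^ n / (1 - t))%R) in B2.
  assert (Hy : (0 <= y <= X * t ^ n)%R).
  { unfold y, X. split; [|right; field; lra].
    apply Rdiv_le_0_compat; [|lra]. pose proof (Cmod_ge_0 a). pose proof (pow_le t n ltac:(lra)). nra. }
  assert (Hyx : (y <= X)%R).
  { pose proof (pow_le1 t n ltac:(lra)). pose proof (pow_le t n ltac:(lra)). nra. }
  assert (E3 : (Cmod (qpoch (a * q ^ n) q m - 1) <= X * t ^ n * Bd)%R).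
  { eapply Rle_trans; [apply B2|]. eapply Rle_trans; [apply exp_sub1_le; lra|].
    apply Rmult_le_compat; try lra. left; apply exp_pos. apply exp_le_exp. lra. }
  apply Rle_trans with (Bd * (X * t ^ n * Bd))%R; [|lra].
  apply Rmult_le_compat; auto; apply Cmod_ge_0.
Qed.

Lemma qpoch_cv a q : (Cmod q < 1)%R -> is_lim_seqC (qpoch a q) (qpinf a q).
Proof.
  intros Hq. set (t := Cmod q). assert (Ht : (0 <= t < 1)%R) by (split; [apply Cmod_ge_0|auto]).
  set (K := (exp (Cmod a / (1 - t)) * exp (Cmod a / (1 - t)) * (Cmod a / (1 - t)))%R).
  assert (HK : (0 <= K)%R).
  { unfold K. pose proof (exp_pos (Cmod a / (1 - t))).
    apply Rmult_le_pos; [nra|apply Rdiv_le_0_compat; [apply Cmod_ge_0|lra]]. }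
  apply is_lim_seqC_cauchy. intros eps He.
  destruct (geom_eventually_lt t K (eps / 2) Ht HK ltac:(lra)) as [N HN].
  exists N. intros m n Hm Hn.
  assert (A1 := Cmod_qpoch_add_sub_le a q N (m - N) Hq).
  assert (A2 := Cmod_qpoch_add_sub_le a q N (n - N) Hq).
  replace (N + (m - N))%nat with m in A1 by lia. replace (N + (n - N))%nat with n in A2 by lia.
  specialize (HN N (le_n N)). fold t K in A1, A2.
  replace (qpoch a q m - qpoch a q n)
    with ((qpoch a q m - qpoch a q N) - (qpoch a q n - qpoch a q N)) by ring.
  eapply Rle_lt_trans; [apply Cmod_triangle|]. rewrite Cmod_opp. lra.
Qed.

(** * Dominated convergence for series *)

Lemma is_lim_seqC_csum (a : nat -> nat -> C) (b : nat -> C) K :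
  (forall k, is_lim_seqC (fun N => a N k) (b k)) ->
  is_lim_seqC (fun N => csum (a N) K) (csum b K).
Proof.
  intros H. induction K; simpl.
  - apply is_lim_seqC_const.
  - apply is_lim_seqC_plus; auto.
Qed.

Lemma is_lim_seqC_csum_scal_r (c : nat -> C) L k :
  is_lim_seqC (csum c) L -> is_lim_seqC (csum (fun j => c j * k)) (L * k).
Proof.
  intros H. apply is_lim_seqC_ext with (fun n => csum c n * k).
  - intros; rewrite csum_scal_r; auto.
  - apply is_lim_seqC_scal_r; auto.
Qed.

Lemma Cmod_csum_tail_le (f : nat -> C) (C0 t : R) K m : (0 <= t < 1)%R -> (0 <= C0)%R ->
  (forall k, (k < m)%nat -> (Cmod (f (K + k)%nat) <= C0 * t ^ (K + k))%R) ->
  (Cmod (csum (fun k => f (K + k)%nat) m) <= C0 * t ^ K / (1 - t))%R.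
Proof.
  intros Ht HC H. eapply Rle_trans; [apply Cmod_csum_le|].
  apply Rle_trans with (rsum (fun k => C0 * t ^ (K + k))%R m); [apply rsum_le; auto|].
  rewrite rsum_scal_l. unfold Rdiv. rewrite Rmult_assoc. apply Rmult_le_compat_l; auto.
  apply rsum_geom_shift_le; auto.
Qed.

Lemma Cmod_csum_sub_le (f : nat -> C) (C0 t : R) K n : (0 <= t < 1)%R -> (0 <= C0)%R ->
  (K <= n)%nat -> (forall k, (Cmod (f k) <= C0 * t ^ k)%R) ->
  (Cmod (csum f n - csum f K) <= C0 * t ^ K / (1 - t))%R.
Proof.
  intros Ht HC Hn H. replace n with (K + (n - K))%nat by lia. rewrite csum_add.
  replace (csum f K + csum (fun k => f (K + k)%nat) (n - K) - csum f K)
    with (csum (fun k => f (K + k)%nat) (n - K)) by ring.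
  apply Cmod_csum_tail_le; auto.
Qed.

Lemma csum_geom_cv (b : nat -> C) (C0 t : R) : (0 <= t < 1)%R -> (0 <= C0)%R ->
  (forall k, (Cmod (b k) <= C0 * t ^ k)%R) -> exists L, is_lim_seqC (csum b) L.
Proof.
  intros Ht HC H. eexists. apply is_lim_seqC_cauchy. intros eps He.
  destruct (geom_eventually_lt t (C0 / (1 - t)) (eps / 2) Ht) as [N HN];
    [apply Rdiv_le_0_compat; lra|lra|].
  specialize (HN N (le_n N)).
  exists N. intros m n Hm Hn.
  pose proof (Cmod_csum_sub_le b C0 t N m Ht HC Hm H).
  pose proof (Cmod_csum_sub_le b C0 t N n Ht HC Hn H).
  replace (csum b m - csum b n) with ((csum b m - csum b N) - (csum b n - csum b N)) by ring.
  eapply Rle_lt_trans; [apply Cmod_triangle|]. rewrite Cmod_opp. unfold Rdiv in *. lra.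
Qed.

Lemma tannery (a : nat -> nat -> C) (b : nat -> C) (C0 t : R) (L : C) :
  (0 <= t < 1)%R -> (0 <= C0)%R ->
  (forall N k, (k <= N)%nat -> (Cmod (a N k) <= C0 * t ^ k)%R) ->
  (forall k, is_lim_seqC (fun N => a N k) (b k)) -> is_lim_seqC (csum b) L ->
  is_lim_seqC (fun N => csum (a N) (S N)) L.
Proof.
  intros Ht HC Ha Hab Hb eps He.
  assert (Bb : forall k, (Cmod (b k) <= C0 * t ^ k)%R).
  { intros k. replace (b k) with (b k - 0) by ring.
    apply (is_lim_seqC_dist_le (fun N => a N k) _ 0 _ k (Hab k)). intros n Hn.
    replace (a n k - 0) with (a n k) by ring. auto. }
  destruct (geom_eventually_lt t (C0 / (1 - t)) (eps / 3) Ht) as [K HK];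
    [apply Rdiv_le_0_compat; lra|lra|].
  specialize (HK K (le_n K)).
  destruct (is_lim_seqC_csum a b K Hab (eps / 3)%R) as [N1 HN1]; [lra|].
  assert (TL : (Cmod (L - csum b K) <= C0 * t ^ K / (1 - t))%R).
  { apply (is_lim_seqC_dist_le (csum b) L (csum b K) _ K Hb). intros n Hn.
    apply Cmod_csum_sub_le; auto. }
  exists (N1 + K)%nat. intros N HN.
  specialize (HN1 N ltac:(lia)).
  assert (TA : (Cmod (csum (a N) (S N) - csum (a N) K) <= C0 * t ^ K / (1 - t))%R).
  { replace (S N) with (K + (S N - K))%nat by lia. rewrite csum_add.
    replace (csum (a N) K + csum (fun k => a N (K + k)%nat) (S N - K) - csum (a N) K)
      with (csum (fun k => a N (K + k)%nat) (S N - K)) by ring.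
    apply Cmod_csum_tail_le; auto. intros k Hk. apply Ha. lia. }
  replace (csum (a N) (S N) - L)
    with ((csum (a N) K - csum b K) + (csum (a N) (S N) - csum (a N) K) - (L - csum b K)) by ring.
  eapply Rle_lt_trans; [apply Cmod_triangle|]. rewrite Cmod_opp.
  eapply Rle_lt_trans; [apply Rplus_le_compat_r, Cmod_triangle|].
  unfold Rdiv in *. lra.
Qed.

Lemma tri_pow_le_geom (t Z : R) : (0 <= t < 1)%R -> (0 <= Z)%R ->
  exists C0, (0 <= C0)%R /\ forall k, (t ^ tri k * Z ^ k <= C0 * (1/2) ^ k)%R.
Proof.
  intros Ht HZ.
  destruct (geom_eventually_lt t Z (1/2) Ht HZ ltac:(lra)) as [K0 HK0].
  set (a := fun k => (t ^ tri k * Z ^ k)%R).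
  assert (Ha : forall k, (0 <= a k * 2 ^ k)%R).
  { intros. unfold a. repeat apply Rmult_le_pos; apply pow_le; lra. }
  exists (rsum (fun k => a k * 2 ^ k)%R (S K0)). split; [apply rsum_nonneg; auto|].
  assert (Fin : forall k, (k <= K0)%nat -> (a k <= rsum (fun k => a k * 2 ^ k)%R (S K0) * (1/2) ^ k)%R).
  { intros k Hk.
    assert (X : (a k * 2 ^ k <= rsum (fun k => a k * 2 ^ k)%R (S K0))%R).
    { replace (S K0) with (k + S (K0 - k))%nat by lia. rewrite rsum_add, rsum_S_shift, Nat.add_0_r.
      pose proof (rsum_nonneg k _ Ha).
      pose proof (rsum_nonneg (K0 - k) (fun j => a (k + S j)%nat * 2 ^ (k + S j))%R (fun j => Ha _)).
      lra. }
    assert (P : (2 ^ k * (1/2) ^ k = 1)%R)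
      by (rewrite <- Rpow_mult_distr; replace (2 * (1/2))%R with 1%R by field; apply pow1).
    apply Rmult_le_compat_r with (r := ((1/2) ^ k)%R) in X; [|apply pow_le; lra].
    rewrite Rmult_assoc, P, Rmult_1_r in X. exact X. }
  intros k. induction k; [apply Fin; lia|].
  destruct (Nat.le_gt_cases (S k) K0) as [Hk|Hk]; [apply Fin; auto|].
  change (t ^ tri (S k) * Z ^ S k)%R with (a (S k)).
  assert (E : a (S k) = (a k * (Z * t ^ k))%R) by (unfold a; simpl tri; rewrite pow_add; simpl; ring).
  rewrite E. specialize (HK0 k ltac:(lia)). fold (a k) in IHk. simpl pow.
  assert (0 <= Z * t ^ k)%R by (apply Rmult_le_pos; auto; apply pow_le; lra).
  assert (0 <= a k)%R by (unfold a; apply Rmult_le_pos; apply pow_le; lra).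
  nra.
Qed.

(** * Infinite products, Euler's identity and the Jacobi triple product *)

Lemma qfac_cv q : (Cmod q < 1)%R -> is_lim_seqC (qfac q) (qpinf q q).
Proof. apply qpoch_cv. Qed.

Lemma Cmod_qpinf_qq_ge q : (Cmod q < 1)%R -> (qfac_lb (Cmod q) <= Cmod (qpinf q q))%R.
Proof.
  intros Hq. apply Rnot_lt_le. intros X.
  destruct (qfac_cv q Hq (qfac_lb (Cmod q) - Cmod (qpinf q q))%R) as [N HN]; [lra|].
  specialize (HN N (le_n N)). pose proof (Cmod_qfac_ge q N Hq).
  pose proof (Cmod_triangle (qfac q N - qpinf q q) (qpinf q q)) as T.
  replace (qfac q N - qpinf q q + qpinf q q) with (qfac q N) in T by ring. lra.
Qed.

Lemma qpinf_qq_neq0 q : (Cmod q < 1)%R -> qpinf q q <> 0.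
Proof.
  intros Hq E. pose proof (Cmod_qpinf_qq_ge q Hq) as H.
  rewrite E, Cmod_0 in H. pose proof (qfac_lb_pos (Cmod q)). lra.
Qed.

Lemma Cmod_qbin_le q N k : (Cmod q < 1)%R -> (k <= N)%nat ->
  (Cmod (qbin q N k) <= exp (Cmod q / (1 - Cmod q)) * (/ qfac_lb (Cmod q) * / qfac_lb (Cmod q)))%R.
Proof.
  intros Hq Hk. rewrite qbin_le by auto.
  replace (qfac q N / (qfac q k * qfac q (N - k))) with (qfac q N * (/ qfac q k * / qfac q (N - k)))
    by (field; split; apply qfac_neq0; auto).
  rewrite !Cmod_mult.
  apply Rmult_le_compat; try apply Cmod_ge_0; [apply Rmult_le_pos; apply Cmod_ge_0| |].
  - apply Cmod_qpoch_le_exp; auto.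
  - apply Rmult_le_compat; try apply Cmod_ge_0; apply Cmod_inv_qfac_le; auto.
Qed.

Lemma qbin_cv q k : (Cmod q < 1)%R -> is_lim_seqC (fun N => qbin q N k) (/ qfac q k).
Proof.
  intros Hq. apply is_lim_seqC_ext_loc with (N0 := k)
    (u := fun N => qfac q N / (qfac q k * qfac q (N - k))); [intros n Hn; rewrite qbin_le; auto|].
  replace (/ qfac q k) with (qpinf q q / (qfac q k * qpinf q q))
    by (field; split; [apply qfac_neq0|apply qpinf_qq_neq0]; auto).
  apply is_lim_seqC_mult; [apply qfac_cv; auto|apply is_lim_seqC_inv].
  - apply Cmult_neq_0; [apply qfac_neq0|apply qpinf_qq_neq0]; auto.
  - apply is_lim_seqC_scal_l, is_lim_seqC_sub_shift, qfac_cv; auto.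
Qed.

Lemma qbin_central_cv p r : (Cmod p < 1)%R ->
  is_lim_seqC (fun n => qbin p (2 * n) (n + r)) (/ qpinf p p).
Proof.
  intros Hp. apply is_lim_seqC_ext_loc with (N0 := r)
    (u := fun n => qfac p (2 * n) / (qfac p (n + r) * qfac p (n - r))).
  { intros n Hn. rewrite qbin_le by lia. do 3 f_equal. lia. }
  replace (/ qpinf p p) with (qpinf p p / (qpinf p p * qpinf p p))
    by (field; apply qpinf_qq_neq0; auto).
  apply is_lim_seqC_mult; [|apply is_lim_seqC_inv].
  - apply (is_lim_seqC_subseq (qfac p) _ (fun n => (2 * n)%nat)); [|apply qfac_cv; auto].
    intros M; exists M; intros; lia.
  - apply Cmult_neq_0; apply qpinf_qq_neq0; auto.
  - apply is_lim_seqC_mult; [apply is_lim_seqC_shift|apply is_lim_seqC_sub_shift]; apply qfac_cv; auto.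
Qed.

Lemma euler q z : (Cmod q < 1)%R ->
  is_lim_seqC (csum (fun k => q ^ tri k * z ^ k / qfac q k)) (qpinf (- z) q).
Proof.
  intros Hq. set (t := Cmod q). assert (Ht : (0 <= t < 1)%R) by (split; [apply Cmod_ge_0|auto]).
  destruct (tri_pow_le_geom t (Cmod z) Ht (Cmod_ge_0 z)) as [C1 [HC1 B1]].
  set (K := (exp (t / (1 - t)) * (/ qfac_lb t * / qfac_lb t))%R).
  assert (HK : (0 <= K)%R).
  { unfold K. pose proof (Rinv_0_lt_compat _ (qfac_lb_pos t)). pose proof (exp_pos (t / (1 - t))).
    apply Rmult_le_pos; [lra|apply Rmult_le_pos; lra]. }
  assert (HI : (0 <= / qfac_lb t)%R) by (left; apply Rinv_0_lt_compat, qfac_lb_pos).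
  destruct (csum_geom_cv (fun k => q ^ tri k * z ^ k / qfac q k) (C1 * / qfac_lb t) (1/2))
    as [L HL]; [lra|apply Rmult_le_pos; auto| |].
  { intros k. unfold Cdiv. rewrite !Cmod_mult, !Cmod_pow.
    apply Rle_trans with (C1 * (1/2) ^ k * / qfac_lb t)%R; [|right; ring].
    apply Rmult_le_compat; auto; [apply Rmult_le_pos; apply pow_le, Cmod_ge_0|apply Cmod_ge_0|].
    apply Cmod_inv_qfac_le; auto. }
  replace (qpinf (- z) q) with L; [auto|].
  apply (is_lim_seqC_unique (fun N => csum (fun k => qbin q N k * q ^ tri k * z ^ k) (S N))).
  - apply (tannery (fun N k => qbin q N k * q ^ tri k * z ^ k)
             (fun k => q ^ tri k * z ^ k / qfac q k) (K * C1) (1/2));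
      [lra|apply Rmult_le_pos; auto| | |exact HL].
    + intros N k Hk. rewrite <- Cmult_assoc, Cmod_mult, Rmult_assoc.
      apply Rmult_le_compat; try apply Cmod_ge_0; [apply Cmod_qbin_le; auto|].
      rewrite Cmod_mult, !Cmod_pow. apply B1.
    + intros k. apply is_lim_seqC_ext with (fun N => qbin q N k * (q ^ tri k * z ^ k)); [intros; ring|].
      replace (q ^ tri k * z ^ k / qfac q k) with (/ qfac q k * (q ^ tri k * z ^ k)) by (unfold Cdiv; ring).
      apply is_lim_seqC_scal_r, qbin_cv; auto.
  - apply is_lim_seqC_ext with (qpoch (- z) q); [intros N; rewrite qbinomial; auto|].
    apply qpoch_cv; auto.
Qed.

Lemma qpinf_split a q n : (Cmod q < 1)%R -> qpinf a q = qpoch a q n * qpinf (a * q ^ n) q.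
Proof.
  intros Hq. apply (is_lim_seqC_unique (fun m => qpoch a q (m + n))).
  - apply is_lim_seqC_shift, qpoch_cv; auto.
  - apply is_lim_seqC_ext with (fun m => qpoch a q n * qpoch (a * q ^ n) q m).
    + intros m. rewrite Nat.add_comm, qpoch_add. auto.
    + apply is_lim_seqC_scal_l, qpoch_cv; auto.
Qed.

Lemma qpinf_m1 q : (Cmod q < 1)%R -> qpinf (- (1)) q = 2 * qpinf (- q) q.
Proof.
  intros Hq. rewrite (qpinf_split (- (1)) q 1 Hq), qpoch_S, qpoch_0, Cpow_1_r.
  replace (- (1) * q) with (- q) by ring. f_equal. simpl. ring.
Qed.

Lemma qfac_mod5 q n :
  qfac q (5 * n) = qpoch q (q ^ 5) n * qpoch (q ^ 2) (q ^ 5) n * qpoch (q ^ 3) (q ^ 5) n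
                   * qpoch (q ^ 4) (q ^ 5) n * qpoch (q ^ 5) (q ^ 5) n.
Proof.
  unfold qfac. induction n.
  - rewrite Nat.mul_0_r, !qpoch_0. ring.
  - replace (5 * S n)%nat with (5 * n + 5)%nat by lia. rewrite qpoch_add, IHn.
    rewrite !(qpoch_S _ (q ^ 5) n), <- !Cpow_mult_r.
    change 5%nat with (S (S (S (S (S O))))) at 1.
    rewrite !qpoch_S, qpoch_0. ring.
Qed.

Lemma qpinf_mod5 q : (Cmod q < 1)%R ->
  qpinf q q = qpinf q (q ^ 5) * qpinf (q ^ 2) (q ^ 5) * qpinf (q ^ 3) (q ^ 5)
              * qpinf (q ^ 4) (q ^ 5) * qpinf (q ^ 5) (q ^ 5).
Proof.
  intros Hq. assert (H5 : (Cmod (q ^ 5) < 1)%R) by (apply Cmod_pow_S_lt1; auto).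
  apply (is_lim_seqC_unique (fun n => qfac q (5 * n))).
  - apply (is_lim_seqC_subseq (qfac q) _ (fun n => (5 * n)%nat)); [|apply qfac_cv; auto].
    intros M. exists M. intros; lia.
  - apply is_lim_seqC_ext with (fun n => qpoch q (q ^ 5) n * qpoch (q ^ 2) (q ^ 5) n
                      * qpoch (q ^ 3) (q ^ 5) n * qpoch (q ^ 4) (q ^ 5) n * qpoch (q ^ 5) (q ^ 5) n).
    + intros n. rewrite qfac_mod5. auto.
    + repeat apply is_lim_seqC_mult; apply qpoch_cv; auto.
Qed.

Lemma jtp_term_geom_bound p z w : (Cmod p < 1)%R ->
  exists C0, (0 <= C0)%R /\ forall r, (Cmod (jtp_term p z w r) <= C0 * (1/2) ^ r)%R.
Proof.
  intros Hp. set (t := Cmod p). assert (Ht : (0 <= t < 1)%R) by (split; [apply Cmod_ge_0|auto]).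
  destruct (tri_pow_le_geom t (Cmod z) Ht (Cmod_ge_0 z)) as [C1 [HC1 B1]].
  destruct (tri_pow_le_geom t (Cmod w) Ht (Cmod_ge_0 w)) as [C2 [HC2 B2]].
  exists (C1 + C2)%R. split; [lra|]. intros r.
  assert (M : forall x, Cmod (theta_mono p x r) = (t ^ tri r * Cmod x ^ r)%R)
    by (intros; unfold theta_mono; rewrite !Cmod_mult, Cmod_pow_m1, !Cmod_pow; fold t; ring).
  unfold jtp_term. eapply Rle_trans; [apply Cmod_triangle|].
  specialize (B1 r). specialize (B2 r). rewrite M.
  assert (0 <= C2 * (1/2) ^ r)%R by (apply Rmult_le_pos; auto; apply pow_le; lra).
  destruct (Nat.eqb r 0); [rewrite Cmod_0|rewrite M]; nra.
Qed.

Lemma jacobi_triple_product p z w : (Cmod p < 1)%R -> z * w = p -> z <> 0 ->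
  is_lim_seqC (csum (jtp_term p z w)) (qpinf p p * qpinf z p * qpinf w p).
Proof.
  intros Hp E Hz. set (t := Cmod p). assert (Ht : (0 <= t < 1)%R) by (split; [apply Cmod_ge_0|auto]).
  destruct (jtp_term_geom_bound p z w Hp) as [C0 [HC0 B]].
  assert (Pn := qpinf_qq_neq0 p Hp).
  assert (HI : (0 <= / qfac_lb t)%R) by (left; apply Rinv_0_lt_compat, qfac_lb_pos).
  set (Kp := (exp (t / (1 - t)) * (/ qfac_lb t * / qfac_lb t))%R).
  assert (HK : (0 <= Kp)%R) by (unfold Kp; pose proof (exp_pos (t / (1 - t))); nra).
  destruct (csum_geom_cv (fun r => jtp_term p z w r * / qpinf p p) (C0 * / qfac_lb t) (1/2))
    as [L HL]; [lra|apply Rmult_le_pos; auto| |].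
  { intros r. rewrite Cmod_mult, Cmod_inv by auto.
    apply Rle_trans with (C0 * (1/2) ^ r * / qfac_lb t)%R; [|right; ring].
    apply Rmult_le_compat; auto; [apply Cmod_ge_0|left; apply Rinv_0_lt_compat, Cmod_gt_0; auto|].
    apply Rinv_le_contravar; [apply qfac_lb_pos|apply Cmod_qpinf_qq_ge; auto]. }
  assert (EL : L = qpinf z p * qpinf w p).
  { apply (is_lim_seqC_unique (fun n => csum (fun r => qbin p (2 * n) (n + r) * jtp_term p z w r) (S n))).
    - apply (tannery (fun n r => qbin p (2 * n) (n + r) * jtp_term p z w r)
               (fun r => jtp_term p z w r * / qpinf p p) (Kp * C0) (1/2));
        [lra|apply Rmult_le_pos; auto| | |exact HL].
      + intros N k Hk. rewrite Cmod_mult, Rmult_assoc.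
        apply Rmult_le_compat; try apply Cmod_ge_0; auto. apply Cmod_qbin_le; auto. lia.
      + intros k. rewrite Cmult_comm. apply is_lim_seqC_scal_r, qbin_central_cv; auto.
    - apply is_lim_seqC_ext with (fun n => qpoch z p n * qpoch w p n);
        [intros n; apply jtp_finite; auto|].
      apply is_lim_seqC_mult; apply qpoch_cv; auto. }
  apply is_lim_seqC_ext with (fun n => csum (fun r => jtp_term p z w r * / qpinf p p) n * qpinf p p).
  { intros n. rewrite csum_scal_r. field. auto. }
  replace (qpinf p p * qpinf z p * qpinf w p) with (L * qpinf p p) by (rewrite EL; ring).
  apply is_lim_seqC_scal_r; auto.
Qed.

(** * The Rogers-Ramanujan identities *)

Lemma rr_series_cv q s : (Cmod q < 1)%R ->
  exists L, is_lim_seqC (csum (fun j => q ^ (j * j + s * j) / qfac q j)) L.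
Proof.
  intros Hq. apply (csum_geom_cv _ (/ qfac_lb (Cmod q)) (Cmod q)).
  - split; [apply Cmod_ge_0|auto].
  - left; apply Rinv_0_lt_compat, qfac_lb_pos.
  - intros j. unfold Cdiv. rewrite Cmod_mult, Rmult_comm.
    apply Rmult_le_compat; try apply Cmod_ge_0;
      [apply Cmod_inv_qfac_le; auto|apply Cmod_pow_le_pow; auto; nia].
Qed.

Lemma bailey_lhs_cv q s L : (Cmod q < 1)%R ->
  is_lim_seqC (csum (fun j => q ^ (j * j + s * j) / qfac q j)) L ->
  is_lim_seqC (fun N => csum (fun j => q ^ (j * j + s * j) / (qfac q j * qfac q (N - j))) (S N))
    (L * / qpinf q q).
Proof.
  intros Hq HL. set (t := Cmod q). assert (Ht : (0 <= t < 1)%R) by (split; [apply Cmod_ge_0|auto]).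
  set (Kc := (/ qfac_lb t)%R). assert (HKc : (0 <= Kc)%R) by (left; apply Rinv_0_lt_compat, qfac_lb_pos).
  apply (tannery _ (fun j => q ^ (j * j + s * j) / qfac q j * / qpinf q q) (Kc * Kc) t);
    [auto|apply Rmult_le_pos; auto| | |apply is_lim_seqC_csum_scal_r; auto].
  - intros N j Hj.
    replace (q ^ (j * j + s * j) / (qfac q j * qfac q (N - j)))
      with (q ^ (j * j + s * j) * (/ qfac q j * / qfac q (N - j)))
      by (field; split; apply qfac_neq0; auto).
    rewrite !Cmod_mult, Rmult_comm.
    apply Rmult_le_compat; try apply Cmod_ge_0; [apply Rmult_le_pos; apply Cmod_ge_0| |].
    + apply Rmult_le_compat; try apply Cmod_ge_0; apply Cmod_inv_qfac_le; auto.
    + apply Cmod_pow_le_pow; auto; nia.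
  - intros j. apply is_lim_seqC_ext with (fun N => q ^ (j * j + s * j) / qfac q j * / qfac q (N - j));
      [intros N; field; split; apply qfac_neq0; auto|].
    apply is_lim_seqC_scal_l, is_lim_seqC_inv; [apply qpinf_qq_neq0; auto|].
    apply is_lim_seqC_sub_shift, qfac_cv; auto.
Qed.

Lemma bailey_rhs_cv q s al J : (Cmod q < 1)%R ->
  (forall r, (Cmod (al r) <= 2 * Cmod q ^ tri r)%R) ->
  is_lim_seqC (csum (fun r => q ^ (r * r + s * r) * (q ^ (r * r + s * r) * al r))) J ->
  is_lim_seqC (fun N => csum (fun r => q ^ (r * r + s * r) * (q ^ (r * r + s * r) * al r)
                                       / (qfac q (N - r) * qfac q (N + r + s))) (S N))
    (J * (/ qpinf q q * / qpinf q q)).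
Proof.
  intros Hq Hal HJ. set (t := Cmod q). assert (Ht : (0 <= t < 1)%R) by (split; [apply Cmod_ge_0|auto]).
  set (Kc := (/ qfac_lb t)%R). assert (HKc : (0 <= Kc)%R) by (left; apply Rinv_0_lt_compat, qfac_lb_pos).
  set (a := fun r => q ^ (r * r + s * r) * (q ^ (r * r + s * r) * al r)).
  apply (tannery (fun N r => a r / (qfac q (N - r) * qfac q (N + r + s)))
           (fun r => a r * (/ qpinf q q * / qpinf q q)) (2 * (Kc * Kc)) t);
    [auto|apply Rmult_le_pos; [lra|apply Rmult_le_pos; auto]| | |apply is_lim_seqC_csum_scal_r; auto].
  - intros N r Hr. cbv beta.
    replace (a r / (qfac q (N - r) * qfac q (N + r + s)))
      with (a r * (/ qfac q (N - r) * / qfac q (N + r + s))) by (field; split; apply qfac_neq0; auto).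
    assert (Ha : (Cmod (a r) <= 2 * t ^ r)%R).
    { unfold a. rewrite !Cmod_mult.
      assert (Y1 : (Cmod (q ^ (r * r + s * r)) <= t ^ r)%R) by (apply Cmod_pow_le_pow; auto; nia).
      assert (Y2 : (Cmod (q ^ (r * r + s * r)) <= 1)%R) by (apply Cmod_pow_le1; fold t; lra).
      assert (Y3 : (Cmod (al r) <= 2)%R).
      { pose proof (Hal r) as H. fold t in H. pose proof (pow_le1 t (tri r) ltac:(lra)). lra. }
      pose proof (Cmod_ge_0 (q ^ (r * r + s * r))). pose proof (Cmod_ge_0 (al r)).
      pose proof (pow_le t r ltac:(lra)). nra. }
    rewrite !Cmod_mult. apply Rle_trans with (2 * t ^ r * (Kc * Kc))%R; [|right; ring].
    apply Rmult_le_compat; try apply Cmod_ge_0; auto; [apply Rmult_le_pos; apply Cmod_ge_0|].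
    apply Rmult_le_compat; try apply Cmod_ge_0; apply Cmod_inv_qfac_le; auto.
  - intros r. apply is_lim_seqC_ext with (fun N => a r * (/ qfac q (N - r) * / qfac q (N + r + s)));
      [intros N; field; split; apply qfac_neq0; auto|].
    apply is_lim_seqC_scal_l, is_lim_seqC_mult;
      (apply is_lim_seqC_inv; [apply qpinf_qq_neq0; auto|]).
    + apply is_lim_seqC_sub_shift, qfac_cv; auto.
    + apply (is_lim_seqC_subseq (qfac q) _ (fun N => (N + r + s)%nat)); [|apply qfac_cv; auto].
      intros M; exists M; intros; lia.
Qed.

(* Letting N -> oo in bailey_lemma_twice. *)
Lemma bailey_limit q s al J : (Cmod q < 1)%R -> bailey_pair q s al delta0 ->
  (forall r, (Cmod (al r) <= 2 * Cmod q ^ tri r)%R) ->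
  is_lim_seqC (csum (fun r => q ^ (r * r + s * r) * (q ^ (r * r + s * r) * al r))) J ->
  is_lim_seqC (csum (fun j => q ^ (j * j + s * j) / qfac q j)) (J / qpinf q q).
Proof.
  intros Hq Hp Hal HJ. destruct (rr_series_cv q s Hq) as [L HL].
  assert (Pn := qpinf_qq_neq0 q Hq).
  assert (E : L * / qpinf q q = J * (/ qpinf q q * / qpinf q q)).
  { apply (is_lim_seqC_unique _ _ _ (bailey_lhs_cv q s L Hq HL)).
    eapply is_lim_seqC_ext; [|apply (bailey_rhs_cv q s al J Hq Hal HJ)].
    intros N. symmetry. apply bailey_lemma_twice; auto. }
  replace (J / qpinf q q) with (L * / qpinf q q * qpinf q q); [|rewrite E; field; auto].
  replace (L * / qpinf q q * qpinf q q) with L by (field; auto). auto.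
Qed.

Lemma Cmod_unit_alpha0_le q r : (Cmod q < 1)%R -> (Cmod (unit_alpha0 q r) <= 2 * Cmod q ^ tri r)%R.
Proof.
  intros Hq. unfold unit_alpha0, jtp_term, theta_mono.
  eapply Rle_trans; [apply Cmod_triangle|].
  rewrite !Cmod_mult, Cmod_pow_m1, Cmod_pow, Cpow_1_l, Cmod_1.
  pose proof (pow_le (Cmod q) (tri r) (Cmod_ge_0 q)).
  destruct (Nat.eqb r 0); [rewrite Cmod_0; lra|].
  rewrite !Cmod_mult, Cmod_pow_m1, !Cmod_pow. pose proof (Cmod_pow_le1 q r ltac:(lra)).
  rewrite Cmod_pow in H0. nra.
Qed.

Lemma Cmod_unit_alpha1_le q r : (Cmod q < 1)%R -> (Cmod (unit_alpha1 q r) <= 2 * Cmod q ^ tri r)%R.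
Proof.
  intros Hq. unfold unit_alpha1. rewrite !Cmod_mult, Cmod_pow_m1, Cmod_pow.
  assert (X : (Cmod (1 - q ^ (2 * r + 1)) <= 2)%R).
  { eapply Rle_trans; [apply Cmod_triangle|]. rewrite Cmod_1, Cmod_opp.
    pose proof (Cmod_pow_le1 q (2 * r + 1) ltac:(lra)). lra. }
  pose proof (pow_le (Cmod q) (tri r) (Cmod_ge_0 q)). nra.
Qed.

Lemma unit_alpha0_theta q r :
  q ^ (r * r + 0 * r) * (q ^ (r * r + 0 * r) * unit_alpha0 q r) = jtp_term (q ^ 5) (q ^ 2) (q ^ 3) r.
Proof.
  unfold unit_alpha0, jtp_term, theta_mono. rewrite Cpow_1_l.
  destruct (Nat.eqb r 0) eqn:E; [apply Nat.eqb_eq in E; subst; simpl; ring|].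
  rewrite <- !Cpow_mult_r. assert (T := tri_double r).
  set (X := q ^ (r * r + 0 * r) * q ^ (r * r + 0 * r) * q ^ tri r).
  assert (M1 : X = q ^ (5 * tri r) * q ^ (2 * r)) by (unfold X; rewrite <- !Cpow_add_r; f_equal; nia).
  assert (M2 : X * q ^ r = q ^ (5 * tri r) * q ^ (3 * r))
    by (unfold X; rewrite <- !Cpow_add_r; f_equal; nia).
  transitivity ((-1) ^ r * X * 1 + (-1) ^ r * (X * q ^ r)); [unfold X; ring|].
  rewrite M2, M1. ring.
Qed.

Lemma unit_alpha1_theta q m :
  q ^ (m * m + 1 * m) * (q ^ (m * m + 1 * m) * unit_alpha1 q m)
  = theta_mono (q ^ 5) (q ^ 4) m + theta_mono (q ^ 5) q (S m).
Proof.
  unfold unit_alpha1, theta_mono. rewrite <- !Cpow_mult_r. assert (T := tri_double m).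
  set (X := q ^ (m * m + 1 * m) * q ^ (m * m + 1 * m) * q ^ tri m).
  assert (M1 : X = q ^ (5 * tri m) * q ^ (4 * m)) by (unfold X; rewrite <- !Cpow_add_r; f_equal; nia).
  assert (M2 : X * q ^ (2 * m + 1) = q ^ (5 * tri (S m)) * q ^ S m)
    by (unfold X; rewrite <- !Cpow_add_r; f_equal; simpl tri; nia).
  rewrite (Cpow_S (-1) m).
  transitivity ((-1) ^ m * X - (-1) ^ m * (X * q ^ (2 * m + 1))); [unfold X; ring|].
  rewrite M2, M1. ring.
Qed.

Lemma csum_unit_alpha1_theta q n :
  csum (fun m => q ^ (m * m + 1 * m) * (q ^ (m * m + 1 * m) * unit_alpha1 q m)) (S n)
  = csum (jtp_term (q ^ 5) (q ^ 4) q) (S n) + theta_mono (q ^ 5) q (S n).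
Proof.
  induction n.
  - rewrite !csum_S, unit_alpha1_theta. unfold jtp_term. cbn [csum Nat.eqb]. ring.
  - rewrite (csum_S _ (S n)), IHn, (csum_S (jtp_term _ _ _) (S n)), unit_alpha1_theta.
    unfold jtp_term. simpl Nat.eqb. cbv iota. ring.
Qed.

Lemma theta_mono_cv0 p x : (Cmod p <= 1)%R -> (Cmod x < 1)%R -> is_lim_seqC (theta_mono p x) 0.
Proof.
  intros Hp Hx eps He.
  destruct (geom_eventually_lt (Cmod x) 1 eps ltac:(split; [apply Cmod_ge_0|auto]) ltac:(lra) He)
    as [N HN].
  exists N. intros n Hn. specialize (HN n Hn).
  replace (theta_mono p x n - 0) with (theta_mono p x n) by ring.
  unfold theta_mono. rewrite !Cmod_mult, Cmod_pow_m1, !Cmod_pow.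
  pose proof (pow_le1 (Cmod p) (tri n) ltac:(split; [apply Cmod_ge_0|auto])).
  pose proof (pow_le (Cmod p) (tri n) (Cmod_ge_0 p)). pose proof (pow_le (Cmod x) n (Cmod_ge_0 x)).
  nra.
Qed.

Lemma qpinf_0_0 : qpinf 0 0 = 1.
Proof.
  apply (is_lim_seqC_unique (qpoch 0 0)); [apply qpoch_cv; rewrite Cmod_0; lra|].
  apply is_lim_seqC_ext with (fun _ => 1); [|apply is_lim_seqC_const].
  intros n. induction n; [reflexivity|]. rewrite qpoch_S, <- IHn. ring.
Qed.

Lemma rr_series_at_0 s :
  is_lim_seqC (csum (fun n => 0 ^ (n * n + s * n) / qfac 0 n)) 1.
Proof.
  apply is_lim_seqC_ext_loc with (N0 := 1%nat) (u := fun _ => 1); [|apply is_lim_seqC_const].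
  intros [|n] Hn; [lia|]. rewrite csum_S_shift, csum_eq0.
  - rewrite !Nat.mul_0_r. unfold qfac. simpl. field.
  - intros k Hk. replace (S k * S k + s * S k)%nat with (S (k * S k + k + s * S k)) by nia.
    rewrite Cpow_0_S. unfold Cdiv. ring.
Qed.

Lemma qpinf_mod5_neq0 q : (Cmod q < 1)%R ->
  qpinf q (q ^ 5) <> 0 /\ qpinf (q ^ 2) (q ^ 5) <> 0 /\ qpinf (q ^ 3) (q ^ 5) <> 0
  /\ qpinf (q ^ 4) (q ^ 5) <> 0 /\ qpinf (q ^ 5) (q ^ 5) <> 0.
Proof.
  intros Hq. assert (Pn := qpinf_qq_neq0 q Hq). rewrite (qpinf_mod5 q Hq) in Pn.
  repeat split; intro X; apply Pn; rewrite X; ring.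
Qed.

Theorem rogers_ramanujan_G q : (Cmod q < 1)%R ->
  is_lim_seqC (csum (fun n => q ^ (n * n) / qfac q n))
    (/ (qpinf q (q ^ 5) * qpinf (q ^ 4) (q ^ 5))).
Proof.
  intros Hq.
  apply is_lim_seqC_ext with (csum (fun n => q ^ (n * n + 0 * n) / qfac q n));
    [intros N; apply csum_ext; intros n _; rewrite Nat.mul_0_l, Nat.add_0_r; auto|].
  destruct (Ceq_dec q 0) as [Z|Z].
  { subst. rewrite !Cpow_0_S, qpinf_0_0. replace (/ (1 * 1)) with (RtoC 1) by field.
    apply rr_series_at_0. }
  assert (H5 : (Cmod (q ^ 5) < 1)%R) by (apply Cmod_pow_S_lt1; auto).
  destruct (qpinf_mod5_neq0 q Hq) as (N1 & N2 & N3 & N4 & N5).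
  assert (J := jacobi_triple_product (q ^ 5) (q ^ 2) (q ^ 3) H5
                 ltac:(rewrite <- Cpow_add_r; auto) ltac:(apply Cpow_nz; auto)).
  replace (/ (qpinf q (q ^ 5) * qpinf (q ^ 4) (q ^ 5)))
    with (qpinf (q ^ 5) (q ^ 5) * qpinf (q ^ 2) (q ^ 5) * qpinf (q ^ 3) (q ^ 5) / qpinf q q)
    by (rewrite (qpinf_mod5 q Hq); field; repeat split; auto).
  apply (bailey_limit q 0 (unit_alpha0 q)); auto using bailey_pair_unit0, Cmod_unit_alpha0_le.
  apply is_lim_seqC_ext with (csum (jtp_term (q ^ 5) (q ^ 2) (q ^ 3))); [|exact J].
  intros n. apply csum_ext. intros r _. symmetry. apply unit_alpha0_theta.
Qed.

Theorem rogers_ramanujan_H q : (Cmod q < 1)%R ->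
  is_lim_seqC (csum (fun n => q ^ (n * n + n) / qfac q n))
    (/ (qpinf (q ^ 2) (q ^ 5) * qpinf (q ^ 3) (q ^ 5))).
Proof.
  intros Hq.
  apply is_lim_seqC_ext with (csum (fun n => q ^ (n * n + 1 * n) / qfac q n));
    [intros N; apply csum_ext; intros n _; rewrite Nat.mul_1_l; auto|].
  destruct (Ceq_dec q 0) as [Z|Z].
  { subst. rewrite !Cpow_0_S, qpinf_0_0. replace (/ (1 * 1)) with (RtoC 1) by field.
    apply rr_series_at_0. }
  assert (H5 : (Cmod (q ^ 5) < 1)%R) by (apply Cmod_pow_S_lt1; auto).
  destruct (qpinf_mod5_neq0 q Hq) as (N1 & N2 & N3 & N4 & N5).
  assert (J := jacobi_triple_product (q ^ 5) (q ^ 4) q H5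
                 ltac:(rewrite Cmult_comm, <- (Cpow_S q 4); auto) ltac:(apply Cpow_nz; auto)).
  replace (/ (qpinf (q ^ 2) (q ^ 5) * qpinf (q ^ 3) (q ^ 5)))
    with (qpinf (q ^ 5) (q ^ 5) * qpinf (q ^ 4) (q ^ 5) * qpinf q (q ^ 5) / qpinf q q)
    by (rewrite (qpinf_mod5 q Hq); field; repeat split; auto).
  apply (bailey_limit q 1 (unit_alpha1 q)); auto using bailey_pair_unit1, Cmod_unit_alpha1_le.
  apply is_lim_seqC_ext_loc with (N0 := 1%nat)
    (u := fun n => csum (jtp_term (q ^ 5) (q ^ 4) q) n + theta_mono (q ^ 5) q n).
  - intros [|n] Hn; [lia|]. symmetry. apply csum_unit_alpha1_theta.
  - rewrite <- Cplus_0_r. apply is_lim_seqC_plus; [exact J|].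
    apply theta_mono_cv0; [lra|auto].
Qed.

(** * Triple series *)

Lemma INR_pow_eventually_lt (s K : R) : (0 <= s < 1)%R -> (0 <= K)%R -> forall eps, (0 < eps)%R ->
  exists N0, forall N, (N0 <= N)%nat -> (K * (INR (S N) * s ^ N) < eps)%R.
Proof.
  intros Hs HK eps He.
  set (tau := sqrt s).
  assert (Ht : (0 <= tau < 1)%R).
  { unfold tau. split; [apply sqrt_pos|]. rewrite <- sqrt_1. apply sqrt_lt_1_alt. lra. }
  assert (Hsq : (tau * tau = s)%R) by (unfold tau; apply sqrt_sqrt; lra).
  (* (N + 1) tau^N is bounded by the geometric sum 1 + tau + ... + tau^N *)
  assert (B : forall N, (INR (S N) * tau ^ N <= 1 / (1 - tau))%R).
  { intros N. eapply Rle_trans; [|apply (rsum_geom_le (S N) tau Ht)].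
    rewrite <- rsum_const. apply rsum_le. intros k Hk. apply pow_le_decr; [lra|lia]. }
  destruct (geom_eventually_lt tau (K * (1 / (1 - tau))) eps Ht) as [N0 HN0]; auto.
  { apply Rmult_le_pos; auto. apply Rdiv_le_0_compat; lra. }
  exists N0. intros N HN. specialize (HN0 N HN). specialize (B N).
  replace (s ^ N)%R with (tau ^ N * tau ^ N)%R by (rewrite <- Rpow_mult_distr, Hsq; auto).
  assert (0 <= tau ^ N)%R by (apply pow_le; lra).
  apply Rle_lt_trans with (K * (1 / (1 - tau)) * tau ^ N)%R; [|lra].
  replace (K * (INR (S N) * (tau ^ N * tau ^ N)))%R with (K * (INR (S N) * tau ^ N) * tau ^ N)%R
    by ring.
  apply Rmult_le_compat_r; auto. apply Rmult_le_compat_l; auto.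
Qed.

Lemma tsum3_csum F N :
  tsum3 F N = csum (fun i => csum (fun j => csum (F i j) (S N)) (S N)) (S N).
Proof.
  unfold tsum3. rewrite sum_n_csum. apply csum_ext. intros i _.
  rewrite sum_n_csum. apply csum_ext. intros j _. apply sum_n_csum.
Qed.

Lemma triple_series_ext F F' L :
  (forall i j k, F i j k = F' i j k) -> triple_series F' L -> triple_series F L.
Proof.
  intros E H. unfold triple_series, tsum3 in *.
  apply filterlim_ext with (2 := H). intros N.
  apply sum_n_ext. intros i. apply sum_n_ext. intros j. apply sum_n_ext. intros k.
  symmetry. apply E.
Qed.

Section TripleSeriesDiagonal.

Variables (F : nat -> nat -> nat -> C) (G : nat -> nat -> C) (C0 sg : R).
Hypothesis Hsg : (0 <= sg < 1)%R.
Hypothesis HC0 : (0 <= C0)%R.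
Hypothesis HF : forall i j k, (Cmod (F i j k) <= C0 * sg ^ (i + j + k))%R.
Hypothesis HG : forall i j, is_lim_seqC (csum (F i j)) (G i j).

Lemma Cmod_inner_tail_le i j M :
  (Cmod (G i j - csum (F i j) M) <= C0 / (1 - sg) * sg ^ (i + j) * sg ^ M)%R.
Proof.
  apply (is_lim_seqC_dist_le _ _ _ _ M (HG i j)). intros n Hn.
  eapply Rle_trans; [apply (Cmod_csum_sub_le (F i j) (C0 * sg ^ (i + j)) sg M n Hsg); auto|].
  - apply Rmult_le_pos; auto; apply pow_le; lra.
  - intros k. rewrite Rmult_assoc, <- pow_add. apply HF.
  - right. field. lra.
Qed.

Lemma Cmod_inner_limit_le i j : (Cmod (G i j) <= C0 / (1 - sg) * sg ^ (i + j))%R.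
Proof.
  pose proof (Cmod_inner_tail_le i j 0) as T. simpl in T.
  replace (G i j - 0) with (G i j) in T by ring. lra.
Qed.

Lemma Cmod_box_inner_le N :
  (Cmod (csum (fun i => csum (fun j => csum (F i j) (S N)) (S N)) (S N)
         - csum (fun i => csum (G i) (S N)) (S N))
   <= C0 / (1 - sg) / ((1 - sg) * (1 - sg)) * sg ^ S N)%R.
Proof.
  rewrite <- csum_minus. eapply Rle_trans; [apply Cmod_csum_le|].
  apply Rle_trans with
    (rsum (fun i => C0 / (1 - sg) * sg ^ S N * rsum (fun j => sg ^ j) (S N) * sg ^ i)%R (S N)).
  - apply rsum_le. intros i Hi. rewrite <- csum_minus. eapply Rle_trans; [apply Cmod_csum_le|].
    apply Rle_trans with (rsum (fun j => C0 / (1 - sg) * sg ^ S N * sg ^ i * sg ^ j)%R (S N));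
      [|rewrite rsum_scal_l; change (pow sg) with (fun j => sg ^ j)%R; right; ring].
    apply rsum_le. intros j Hj.
    rewrite <- Cmod_opp, Copp_minus_distr. eapply Rle_trans; [apply Cmod_inner_tail_le|].
    rewrite pow_add. right; ring.
  - rewrite rsum_scal_l.
    assert (0 <= C0 / (1 - sg) * sg ^ S N)%R
      by (apply Rmult_le_pos; [apply Rdiv_le_0_compat; lra|apply pow_le; lra]).
    assert (P : forall n, (0 <= rsum (fun j => sg ^ j) n)%R)
      by (intros; apply rsum_nonneg; intros; apply pow_le; lra).
    apply Rle_trans with (C0 / (1 - sg) * sg ^ S N * (1 / (1 - sg)) * (1 / (1 - sg)))%R.
    + apply Rmult_le_compat; [apply Rmult_le_pos; auto|auto| |apply rsum_geom_le; auto].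
      apply Rmult_le_compat_l; auto. apply rsum_geom_le; auto.
    + right. field. lra.
Qed.

Lemma Cmod_box_diag_le N :
  (Cmod (csum (fun i => csum (G i) (S N)) (S N)
         - csum (fun n => csum (fun i => G i (n - i)%nat) (S n)) (S N))
   <= C0 / (1 - sg) / (1 - sg) * (INR (S N) * sg ^ N))%R.
Proof.
  rewrite (csum_triangle_swap N (fun n i => G i (n - i)%nat)), <- csum_minus.
  eapply Rle_trans; [apply Cmod_csum_le|].
  apply Rle_trans with (rsum (fun i => C0 / (1 - sg) * sg ^ S N / (1 - sg))%R (S N)).
  - apply rsum_le. intros i Hi.
    rewrite (csum_ext (S (N - i)) (fun m => G i (i + m - i)%nat) (G i)) by (intros; f_equal; lia).
    eapply Rle_trans.
    + apply (Cmod_csum_sub_le (G i) (C0 / (1 - sg) * sg ^ i) sg (S (N - i)) (S N) Hsg);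
        [apply Rmult_le_pos; [apply Rdiv_le_0_compat; lra|apply pow_le; lra]|lia|].
      intros k. rewrite Rmult_assoc, <- pow_add. apply Cmod_inner_limit_le.
    + rewrite Rmult_assoc, <- pow_add. replace (i + S (N - i))%nat with (S N) by lia. right; ring.
  - rewrite rsum_const. simpl pow.
    assert (0 <= sg ^ N)%R by (apply pow_le; lra). pose proof (pos_INR (S N)).
    assert (0 <= C0 / (1 - sg) / (1 - sg))%R by (repeat apply Rdiv_le_0_compat; lra).
    apply Rle_trans with (C0 / (1 - sg) / (1 - sg) * (INR (S N) * (sg * sg ^ N)))%R; [right; field; lra|].
    apply Rmult_le_compat_l; auto. apply Rmult_le_compat_l; auto. nra.
Qed.

Lemma triple_series_diag L :
  is_lim_seqC (csum (fun n => csum (fun i => G i (n - i)%nat) (S n))) L -> triple_series F L.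
Proof.
  intros HL. unfold triple_series. apply is_lim_seqC_filterlim.
  apply is_lim_seqC_ext with (fun N => csum (fun i => csum (fun j => csum (F i j) (S N)) (S N)) (S N));
    [intros N; rewrite tsum3_csum; auto|].
  assert (HK : (0 <= C0 / (1 - sg))%R) by (apply Rdiv_le_0_compat; lra).
  intros eps He.
  destruct (HL (eps / 3)%R) as [N1 HN1]; [lra|].
  destruct (INR_pow_eventually_lt sg (C0 / (1 - sg) / (1 - sg)) Hsg
              ltac:(apply Rdiv_le_0_compat; lra) (eps / 3)%R) as [N2 HN2]; [lra|].
  destruct (geom_eventually_lt sg (C0 / (1 - sg) / ((1 - sg) * (1 - sg))) (eps / 3) Hsg)
    as [N3 HN3]; [apply Rdiv_le_0_compat; auto; nra|lra|].
  exists (N1 + N2 + N3)%nat. intros N HN.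
  specialize (HN1 (S N) ltac:(lia)). specialize (HN2 N ltac:(lia)). specialize (HN3 (S N) ltac:(lia)).
  pose proof (Cmod_box_inner_le N). pose proof (Cmod_box_diag_le N).
  set (box := csum (fun i => csum (G i) (S N)) (S N)) in *.
  set (diag := csum (fun n => csum (fun i => G i (n - i)%nat) (S n)) (S N)) in *.
  replace (csum (fun i => csum (fun j => csum (F i j) (S N)) (S N)) (S N) - L)
    with ((csum (fun i => csum (fun j => csum (F i j) (S N)) (S N)) (S N) - box)
          + (box - diag) + (diag - L)) by ring.
  eapply Rle_lt_trans; [apply Cmod_triangle|].
  eapply Rle_lt_trans; [apply Rplus_le_compat_r, Cmod_triangle|]. lra.
Qed.

End TripleSeriesDiagonal.

Lemma pow_tri_le_2pow (t sg : R) k : (0 <= t <= sg)%R -> (1/2 <= sg <= 1)%R ->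
  (t ^ tri k <= 2 * sg ^ k)%R.
Proof.
  intros Ht Hs. apply Rle_trans with (sg ^ tri k)%R; [apply pow_incr; lra|].
  destruct k; [simpl; lra|].
  apply Rle_trans with (sg ^ k)%R; [apply pow_le_decr; [lra|simpl tri; lia]|].
  simpl pow. assert (0 <= sg ^ k)%R by (apply pow_le; lra). nra.
Qed.

Lemma Cmod_mult5_le (a b c d f : C) (A B C' D F : R) :
  (Cmod a <= A)%R -> (Cmod b <= B)%R -> (Cmod c <= C')%R -> (Cmod d <= D)%R -> (Cmod f <= F)%R ->
  (Cmod (a * b * c * d * f) <= A * B * C' * D * F)%R.
Proof.
  intros. rewrite !Cmod_mult.
  repeat apply Rmult_le_compat; auto; try apply Cmod_ge_0; repeat apply Rmult_le_pos; apply Cmod_ge_0.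
Qed.

(* The last factor is the k-th term of Euler's series for (-w q^(i+j); q)_oo. *)
Definition factored_summand (q w : C) (e : nat -> nat) (i j k : nat) : C :=
  q ^ e (i + j)%nat * (q ^ tri i * w ^ i / (qfac q i * qfac q j)) *
  (q ^ tri k * (w * q ^ (i + j)) ^ k / qfac q k).

Lemma Cmod_factored_summand_le q w e i j k :
  (Cmod q < 1)%R -> (Cmod w <= 1)%R -> (forall n, (n <= e n)%nat) ->
  (Cmod (factored_summand q w e i j k)
   <= 2 * (/ qfac_lb (Cmod q)) ^ 3 * ((1 + Cmod q) / 2) ^ (i + j + k))%R.
Proof.
  intros Hq Hw He. set (t := Cmod q). set (sg := ((1 + t) / 2)%R). set (Kc := (/ qfac_lb t)%R).
  assert (Ht : (0 <= t < 1)%R) by (split; [apply Cmod_ge_0|auto]).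
  assert (HKc : (0 <= Kc)%R) by (left; apply Rinv_0_lt_compat, qfac_lb_pos).
  assert (IB : forall n, (Cmod (/ qfac q n) <= Kc)%R) by (intros; apply Cmod_inv_qfac_le; auto).
  assert (Htn : forall n, (0 <= t ^ n <= 1)%R) by (intros; split; [apply pow_le|apply pow_le1]; lra).
  replace (factored_summand q w e i j k)
    with (q ^ e (i + j)%nat * (q ^ tri i * w ^ i) * (/ qfac q i * / qfac q j)
          * (q ^ tri k * (w * q ^ (i + j)) ^ k) * / qfac q k)
    by (unfold factored_summand; field; repeat split; apply qfac_neq0; auto).
  apply Rle_trans with (sg ^ (i + j) * 1 * (Kc * Kc) * (2 * sg ^ k) * Kc)%R;
    [apply Cmod_mult5_le|rewrite !pow_add; right; ring].
  - apply Rle_trans with (t ^ (i + j))%R; [apply Cmod_pow_le_pow; auto|apply pow_incr; unfold sg; lra].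
  - rewrite Cmod_mult, !Cmod_pow. fold t.
    pose proof (Htn (tri i)). pose proof (pow_le1 (Cmod w) i ltac:(split; [apply Cmod_ge_0|auto])).
    pose proof (pow_le (Cmod w) i (Cmod_ge_0 w)). nra.
  - rewrite Cmod_mult. apply Rmult_le_compat; auto; apply Cmod_ge_0.
  - rewrite Cmod_mult, !Cmod_pow, Cmod_mult, Cmod_pow. fold t.
    assert (Y : (0 <= Cmod w * t ^ (i + j) <= 1)%R).
    { pose proof (Htn (i + j)%nat). pose proof (Cmod_ge_0 w). split; nra. }
    pose proof (pow_le1 _ k Y). pose proof (pow_le _ k (proj1 Y)).
    pose proof (pow_tri_le_2pow t sg k ltac:(unfold sg; lra) ltac:(unfold sg; lra)).
    pose proof (Htn (tri k)). nra.
  - apply IB.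
Qed.

Lemma factored_summand_inner_cv q w e i j : (Cmod q < 1)%R ->
  is_lim_seqC (csum (factored_summand q w e i j))
    (q ^ e (i + j)%nat * (q ^ tri i * w ^ i / (qfac q i * qfac q j)) * qpinf (- (w * q ^ (i + j))) q).
Proof.
  intros Hq. apply is_lim_seqC_ext with
    (fun n => q ^ e (i + j)%nat * (q ^ tri i * w ^ i / (qfac q i * qfac q j)) *
              csum (fun k => q ^ tri k * (w * q ^ (i + j)) ^ k / qfac q k) n).
  - intros n. rewrite <- csum_scal_l. reflexivity.
  - apply is_lim_seqC_scal_l, euler; auto.
Qed.

(* Along the diagonal i + j = n, the q-binomial theorem recombines the
   (i, j)-sum with the k-sum into (-w; q)_oo. *)
Lemma factored_summand_diag_sum q w e n : (Cmod q < 1)%R ->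
  csum (fun i => q ^ e (i + (n - i))%nat * (q ^ tri i * w ^ i / (qfac q i * qfac q (n - i)))
                 * qpinf (- (w * q ^ (i + (n - i)))) q) (S n)
  = qpinf (- w) q * (q ^ e n / qfac q n).
Proof.
  intros Hq.
  rewrite (csum_ext (S n) _ (fun i => (q ^ e n * qpinf (- w * q ^ n) q / qfac q n)
                                      * (qbin q n i * q ^ tri i * w ^ i))).
  - rewrite csum_scal_l, qbinomial, (qpinf_split (- w) q n Hq) by auto.
    field. apply qfac_neq0; auto.
  - intros i Hi. replace (i + (n - i))%nat%nat with n by lia. rewrite qbin_le by lia.
    replace (- (w * q ^ n)) with (- w * q ^ n) by ring.
    field. repeat split; apply qfac_neq0; auto.
Qed.

Theorem triple_series_factored q w e R :
  (Cmod q < 1)%R -> (Cmod w <= 1)%R -> (forall n, (n <= e n)%nat) ->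
  is_lim_seqC (csum (fun n => q ^ e n / qfac q n)) R ->
  triple_series (factored_summand q w e) (qpinf (- w) q * R).
Proof.
  intros Hq Hw He HR.
  assert (Ht : (0 <= Cmod q < 1)%R) by (split; [apply Cmod_ge_0|auto]).
  apply (triple_series_diag _ (fun i j => q ^ e (i + j)%nat * (q ^ tri i * w ^ i / (qfac q i * qfac q j))
                                        * qpinf (- (w * q ^ (i + j))) q)
           (2 * (/ qfac_lb (Cmod q)) ^ 3) ((1 + Cmod q) / 2));
    [lra| |intros; apply Cmod_factored_summand_le; auto|intros; apply factored_summand_inner_cv; auto|].
  - pose proof (Rinv_0_lt_compat _ (qfac_lb_pos (Cmod q))).
    pose proof (pow_le (/ qfac_lb (Cmod q)) 3 ltac:(lra)). lra.
  - apply is_lim_seqC_ext with (csum (fun n => qpinf (- w) q * (q ^ e n / qfac q n))).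
    + intros N. apply csum_ext. intros n _. symmetry. apply factored_summand_diag_sum; auto.
    + apply is_lim_seqC_ext with (fun N => qpinf (- w) q * csum (fun n => q ^ e n / qfac q n) N).
      * intros N. rewrite csum_scal_l. auto.
      * apply is_lim_seqC_scal_l; auto.
Qed.

Lemma summand_factored r d e E : (Cmod (r * r) < 1)%R ->
  (forall i j k, E i j k = (2 * (e (i + j) + tri i + tri k + (i + j) * k) + d * i + d * k)%nat) ->
  forall i j k, summand r E i j k = factored_summand (r * r) (r ^ d) e i j k.
Proof.
  intros Hq HE i j k. unfold summand, factored_summand, qfac. cbv zeta.
  rewrite pow_n_Cpow, HE, !(Cpow_add_r r), !(Cpow_mult_r r).
  replace (r ^ 2) with (r * r) by ring.
  rewrite !(Cpow_add_r (r * r)), (Cpow_mult_r (r * r) (i + j) k), (Cpow_add_r (r * r) i j), (Cpow_mult_l (r ^ d)).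
  field. repeat split; apply qpoch_neq0; lra.
Qed.

Lemma triple_series_summand r w d e E R :
  (Cmod (r * r) < 1)%R -> (Cmod w <= 1)%R -> w = r ^ d -> (forall n, (n <= e n)%nat) ->
  is_lim_seqC (csum (fun n => (r * r) ^ e n / qfac (r * r) n)) R ->
  (forall i j k, E i j k = (2 * (e (i + j) + tri i + tri k + (i + j) * k) + d * i + d * k)%nat) ->
  triple_series (summand r E) (qpinf (- w) (r * r) * R).
Proof.
  intros Hq Hw Ew He HR HE. subst w.
  apply (triple_series_ext _ (factored_summand (r * r) (r ^ d) e)).
  - apply summand_factored; auto.
  - apply triple_series_factored; auto.
Qed.

Ltac exponent_identity :=
  intros i j k; cbv beta; unfold Q2;
  pose proof (tri_double i); pose proof (tri_double k); nia.

Theorem theorem4p6 (q r : C) (hq : Cmod q < 1) (hr : r * r = q) :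
  triple_series (summand r (fun i j k => (Q2 i j k)%nat))
    (qpinf (- r) q / (qpinf q (pow_n q 5) * qpinf (pow_n q 4) (pow_n q 5)))
  /\ triple_series (summand r (fun i j k => (Q2 i j k + i + k)%nat))
    (qpinf (- q) q / (qpinf q (pow_n q 5) * qpinf (pow_n q 4) (pow_n q 5)))
  /\ triple_series (summand r (fun i j k => ((3*i*i - i) + 2*j*j + (k*k - k)
                                             + 4*i*j + 2*i*k + 2*j*k)%nat))
    (RtoC 2 * (qpinf (- q) q / (qpinf q (pow_n q 5) * qpinf (pow_n q 4) (pow_n q 5))))
  /\ triple_series (summand r (fun i j k => (Q2 i j k + 2*i + 2*j)%nat))
    (qpinf (- r) q / (qpinf (pow_n q 2) (pow_n q 5) * qpinf (pow_n q 3) (pow_n q 5)))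
  /\ triple_series (summand r (fun i j k => (Q2 i j k + 3*i + 2*j + k)%nat))
    (qpinf (- q) q / (qpinf (pow_n q 2) (pow_n q 5) * qpinf (pow_n q 3) (pow_n q 5)))
  /\ triple_series (summand r (fun i j k => (3*i*i + 2*j*j + (k*k - k)
                                             + 4*i*j + 2*i*k + 2*j*k + i + 2*j)%nat))
    (RtoC 2 * (qpinf (- q) q / (qpinf (pow_n q 2) (pow_n q 5) * qpinf (pow_n q 3) (pow_n q 5)))).
Proof.
  subst q. rewrite !(pow_n_Cpow (r * r) 5), !(pow_n_Cpow (r * r) 4), !(pow_n_Cpow (r * r) 3),
    !(pow_n_Cpow (r * r) 2).
  assert (Hr : (Cmod r <= 1)%R) by (rewrite Cmod_mult in hq; pose proof (Cmod_ge_0 r); nra).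
  assert (Hq : (Cmod (r * r) <= 1)%R) by lra.
  assert (G := rogers_ramanujan_G (r * r) hq). assert (H := rogers_ramanujan_H (r * r) hq).
  unfold Cdiv. rewrite !Cmult_assoc, <- (qpinf_m1 (r * r) hq).
  repeat split.
  - apply (triple_series_summand r r 1 (fun n => n * n)%nat);
      [exact hq|lra|ring|intros; nia|exact G|exponent_identity].
  - apply (triple_series_summand r (r * r) 2 (fun n => n * n)%nat);
      [exact hq|lra|ring|intros; nia|exact G|exponent_identity].
  - apply (triple_series_summand r 1 0 (fun n => n * n)%nat);
      [exact hq|rewrite Cmod_1; lra|ring|intros; nia|exact G|exponent_identity].
  - apply (triple_series_summand r r 1 (fun n => n * n + n)%nat);
      [exact hq|lra|ring|intros; nia|exact H|exponent_identity].
  - apply (triple_series_summand r (r * r) 2 (fun n => n * n + n)%nat);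
      [exact hq|lra|ring|intros; nia|exact H|exponent_identity].
  - apply (triple_series_summand r 1 0 (fun n => n * n + n)%nat);
      [exact hq|rewrite Cmod_1; lra|ring|intros; nia|exact H|exponent_identity].
Qed.
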